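(* Let $I$ be a countable index set with nested finite subsets $I_1\subset I_2\subset\cdots$, $\bigcup_nI_n=I$, and let $\mu:\mathcal{F}[I]\to C(\mathbb{N}^* )$ be the ultrafilter frame measure function. Then for $\mathcal{F},\mathcal{F}_1,\mathcal{F}_2\in\mathcal{F}[I]$: (1) $\mu(\mathcal{F}_1)=\mu(\mathcal{F}_2)$ if and only if $\mathcal{F}_1\approx\mathcal{F}_2$; (2) $\mu(\mathcal{F}_1)(p)\le\mu(\mathcal{F}_2)(p)$ for all $p\in\mathbb{N}^*$ if and only if $\mathcal{F}_1\leqq\mathcal{F}_2$; (3) if $\mathcal{F}$ is a Riesz basis for its closed span then $\mu(\mathcal{F})$ is the constant function $1$; (4) if $\mathcal{F}_1,\mathcal{F}_2$ are orthogonal in the sense of supersets then $\mu(\mathcal{F}_1\oplus\mathcal{F}_2)=\mu(\mathcal{F}_1)+\mu(\mathcal{F}_2)$.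
   Context: $\mathcal{F}[I]$: all families $\{f_i\}_{i\in I}$ in a separable Hilbert space that are frames for their closed span; $\tilde f_i=S^{-1}f_i$ is the canonical dual ($S$ the frame operator on the span). $b_n(\mathcal{F})=\sum_{i\in I_n}\langle f_i,\tilde f_i\rangle$, $a_n(\mathcal{F})=b_n(\mathcal{F})/|I_n|$. For sequences, $\mathbf{x}\approx\mathbf{y}$ iff $\lim_n(x_n-y_n)/|I_n|=0$, and for nonnegative sequences $\mathbf{y}\leqq\mathbf{x}$ iff $\liminf_n(x_n-y_n)/|I_n|\ge0$; $\mathcal{F}\approx\mathcal{G}$ (resp. $\mathcal{F}\leqq\mathcal{G}$) means $b(\mathcal{F})\approx b(\mathcal{G})$ (resp. $b(\mathcal{F})\leqq b(\mathcal{G})$). $\mathbb{N}^*$ is the set of free ultrafilters on $\mathbb{N}$ (ultrafilters containing no finite set) with its standard (Stone–Čech remainder) compact Hausdorff topology; for a bounded sequence $\mathbf{x}$ and $p\in\mathbb{N}^*$, $p\text{-}\lim\mathbf{x}$ is the unique $c$ such that for every $\varepsilon>0$, $\{n:|x_n-c|<\varepsilon\}\in p$. The ultrafilter frame measure function is $\mu(\mathcal{F})(p)=p\text{-}\lim_n a_n(\mathcal{F})$. For $\mathcal{F}_1=\{f^1_i\}$, $\mathcal{F}_2=\{f^2_i\}$ with closed spans $H_1,H_2$, $\mathcal{F}_1\oplus\mathcal{F}_2=\{f^1_i\oplus f^2_i\}_{i\in I}\subset H_1\oplus H_2$; they are orthogonal in the sense of supersets if the ranges in $\ell^2(I)$ of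 the analysis operators $h\mapsto(\langle h,f^k_i\rangle)_{i\in I}$, $k=1,2$, are orthogonal, i.e. $\sum_i\langle g,f^1_i\rangle\langle f^2_i,h\rangle=0$ for all $g\in H_1,h\in H_2$. *)

From HB Require Import structures.
From mathcomp Require Import all_boot all_order all_algebra finmap.
From mathcomp Require Import all_classical all_reals all_analysis.
From mathcomp Require Import complex.

Set Implicit Arguments.
Unset Strict Implicit.
Unset Printing Implicit Defensive.

Import Order.TTheory GRing.Theory Num.Theory.
Import numFieldNormedType.Exports.
Local Open Scope classical_set_scope.
Local Open Scope ring_scope.

Section HilbertFrames.

Variable R : realType.
Local Notation C := R[i].

Definition cmod (z : C) : R := complex.Re `|z|.

Section InnerProduct.
Variable H : lmodType C.
Variable ip : H -> H -> C.

Definition ipnorm (h : H) : R := Num.sqrt (complex.Re (ip h h)).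

Definition is_inner_product : Prop :=
  [/\ forall (a : C) (x y z : H), ip (a *: x + y) z = a * ip x z + ip y z,
      forall x y : H, ip x y = conjc (ip y x),
      forall x : H, 0 <= ip x x
    & forall x : H, ip x x = 0 -> x = 0].

Definition ip_cvg (u : nat -> H) (l : H) : Prop :=
  forall e : R, 0 < e -> exists N : nat, forall n, (N <= n)%N -> ipnorm (u n - l) < e.

Definition ip_cauchy (u : nat -> H) : Prop :=
  forall e : R, 0 < e -> exists N : nat,
    forall m n, (N <= m)%N -> (N <= n)%N -> ipnorm (u m - u n) < e.

Definition ip_complete : Prop :=
  forall u : nat -> H, ip_cauchy u -> exists l, ip_cvg u l.

Definition ip_closure (A : set H) : set H :=
  [set h | forall e : R, 0 < e -> exists g, A g /\ ipnorm (h - g) < e].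

Definition ip_separable : Prop :=
  exists D : set H, countable D /\ ip_closure D = setT.

Definition separable_hilbert : Prop :=
  [/\ is_inner_product, ip_complete & ip_separable].

Variable I : countType.

(* unconditional sums over I (net of finite subsets of I) *)
Definition has_usum (x : I -> H) (l : H) : Prop :=
  forall e : R, 0 < e -> exists J0 : {fset I}, forall J : {fset I},
    (J0 `<=` J)%fset -> ipnorm ((\sum_(i <- J) x i) - l) < e.

Definition has_usumC (x : I -> C) (l : C) : Prop :=
  forall e : R, 0 < e -> exists J0 : {fset I}, forall J : {fset I},
    (J0 `<=` J)%fset -> cmod ((\sum_(i <- J) x i) - l) < e.

Variable f : I -> H.

Definition lin_span : set H :=
  [set h | exists (J : {fset I}) (c : I -> C), h = \sum_(i <- J) c i *: f i].

Definition closed_span : set H := ip_closure lin_span.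

Definition is_frame : Prop :=
  exists A B : R, [/\ 0 < A, 0 < B &
    forall h, closed_span h ->
      ((A * ipnorm h ^+ 2)%:E <= \esum_(i in [set: I]) (cmod (ip h (f i)) ^+ 2)%:E)%E
   /\ (\esum_(i in [set: I]) (cmod (ip h (f i)) ^+ 2)%:E <= (B * ipnorm h ^+ 2)%:E)%E].

Definition is_riesz_basis_of_span : Prop :=
  exists A B : R, [/\ 0 < A, 0 < B &
    forall (J : {fset I}) (c : I -> C),
      A * (\sum_(i <- J) cmod (c i) ^+ 2)
        <= ipnorm (\sum_(i <- J) c i *: f i) ^+ 2
      <= B * (\sum_(i <- J) cmod (c i) ^+ 2)].

Definition frame_op (h : H) : H :=
  xget 0 [set g | has_usum (fun i => ip h (f i) *: f i) g].

(* canonical dual: tilde f_i = S^{-1} f_i, S restricted to the closed lin_span *)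
Definition canonical_dual (i : I) : H :=
  xget 0 [set g | closed_span g /\ frame_op g = f i].

End InnerProduct.

Variable I : countType.
Variable In : nat -> {fset I}.

(* b_n(F) = sum_{i in I_n} <f_i, tilde f_i>  (a real number; the real
   part is taken only to land in R, the value is real anyway) *)
Definition frame_bseq (H : lmodType C) (ip : H -> H -> C) (f : I -> H) : nat -> R :=
  fun n => complex.Re (\sum_(i <- In n) ip (f i) (canonical_dual ip f i)).

Definition frame_aseq (H : lmodType C) (ip : H -> H -> C) (f : I -> H) : nat -> R :=
  fun n => frame_bseq ip f n / (#|` In n |)%:R.

Definition seq_approx (x y : nat -> R) : Prop :=
  (fun n => (x n - y n) / (#|` In n |)%:R) @ \oo --> (0 : R).

Definition seq_leqq (y x : nat -> R) : Prop :=
  (0 <= limn_einf (fun n => ((x n - y n) / (#|` In n |)%:R)%:E))%E.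

End HilbertFrames.

Definition free_ultrafilter (p : set_system nat) : Prop :=
  [/\ p setT /\ ~ p set0,
      (forall A B, p A -> p B -> p (setI A B)),
      (forall A B, A `<=` B -> p A -> p B),
      (forall A, p A \/ p (~` A))
    & forall A, finite_set A -> ~ p A].

Definition Nstar := {p : set_system nat | free_ultrafilter p}.

Definition plim (R : realType) (p : set_system nat) (x : nat -> R) : R :=
  xget 0 [set c | forall e : R, 0 < e -> p [set n | `|x n - c| < e]].

Definition frame_measure (R : realType) (I : countType) (In : nat -> {fset I})
  (H : lmodType R[i]) (ip : H -> H -> R[i]) (f : I -> H) : Nstar -> R :=
  fun p => plim (proj1_sig p) (frame_aseq In ip f).

Definition ip_dsum (R : realType) (H1 H2 : lmodType R[i])
  (ip1 : H1 -> H1 -> R[i]) (ip2 : H2 -> H2 -> R[i]) :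
  (H1 * H2)%type -> (H1 * H2)%type -> R[i] :=
  fun x y => ip1 x.1 y.1 + ip2 x.2 y.2.

Definition ortho_supersets (R : realType) (I : countType) (H1 H2 : lmodType R[i])
  (ip1 : H1 -> H1 -> R[i]) (ip2 : H2 -> H2 -> R[i]) (f1 : I -> H1) (f2 : I -> H2) : Prop :=
  forall g h, closed_span ip1 f1 g -> closed_span ip2 f2 h ->
    has_usumC (fun i => ip1 g (f1 i) * ip2 (f2 i) h) 0.

(* Expanding f_i = S f~_i in the frame gives <f_i, f~_i> = sum_j |<f~_i, f_j>|^2,
   which is at least |<f_i, f~_i>|^2; so <f_i, f~_i> lies in [0, 1], every a_n(F) does
   too, and all p-limits exist.
   A set of indices is cofinite iff it belongs to every free ultrafilter, so a bounded
   sequence tends to 0 (has nonnegative liminf) iff all of its p-limits are 0 (are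
   nonnegative); applied to a_n(F1) - a_n(F2) this gives (1) and (2).
   For (3) and (4) the canonical dual must exist: the frame operator S is inverted on
   the closed span by the Richardson iteration x_(k+1) = x_k + (y - S x_k) / B, which
   contracts by sqrt (1 - A / B). For a Riesz sequence the expansion
   f_i = sum_j <f~_i, f_j> f_j is unique, so <f_i, f~_i> = 1. For an orthogonal pair,
   the canonical dual G of F1 (+) F2 satisfies <f^k_i, G_k> = <f^k_i, f~^k_i> because the
   cross terms of its expansion vanish, so b_n(F1 (+) F2) = b_n(F1) + b_n(F2). *)

From HB Require Import structures.
From mathcomp Require Import all_boot all_order all_algebra finmap.
From mathcomp Require Import all_classical all_reals all_analysis.
From mathcomp Require Import complex.
From mathcomp Require Import ring lra.
Import Order.TTheory GRing.Theory Num.Theory.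
Import numFieldNormedType.Exports.
Local Open Scope classical_set_scope.
Local Open Scope ring_scope.
Local Open Scope complex_scope.
Set Implicit Arguments. Unset Strict Implicit. Unset Printing Implicit Defensive.

Notation cRe := complex.Re.
Notation cIm := complex.Im.

Lemma lt_all_pos_eq0 (R : realType) (a : R) :
  0 <= a -> (forall e, 0 < e -> a < e) -> a = 0.
Proof.
move=> a0 h; apply/eqP; rewrite eq_le a0 andbT.
by apply/ler_addgt0Pr => e /h /ltW; rewrite add0r.
Qed.

Section ComplexFacts.
Variable R : realType.
Implicit Types (z w : R[i]) (k : R).

Lemma cmodE z : cmod z = Num.sqrt (cRe z ^+ 2 + cIm z ^+ 2).
Proof. by case: z. Qed.

Lemma cmod_ge0 z : 0 <= cmod z.
Proof. by rewrite cmodE sqrtr_ge0. Qed.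

Lemma cmod_normc z : (cmod z)%:C = `|z|.
Proof. by rewrite normc_def cmodE. Qed.

Lemma cmod_sqr z : cmod z ^+ 2 = cRe z ^+ 2 + cIm z ^+ 2.
Proof. by rewrite cmodE sqr_sqrtr // addr_ge0 // sqr_ge0. Qed.

Lemma mulc_conj z : z * conjc z = (cmod z ^+ 2)%:C.
Proof.
by rewrite cmod_sqr; case: z => a b; simpc; rewrite /= -!expr2; congr Complex; ring.
Qed.

Lemma cmodM z w : cmod (z * w) = cmod z * cmod w.
Proof. by apply: (@complexI R); rewrite rmorphM /= !cmod_normc normrM. Qed.

Lemma cmodD_le z w : cmod (z + w) <= cmod z + cmod w.
Proof. by rewrite -lecR rmorphD /= !cmod_normc ler_normD. Qed.

Lemma cmodN z : cmod (- z) = cmod z.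
Proof. by apply: (@complexI R); rewrite !cmod_normc normrN. Qed.

Lemma cmod_distC z w : cmod (z - w) = cmod (w - z).
Proof. by rewrite -cmodN opprB. Qed.

Lemma cmod_conjc z : cmod (conjc z) = cmod z.
Proof. by rewrite !cmodE; case: z => a b /=; rewrite sqrrN. Qed.

Lemma cmod_real k : cmod k%:C = `|k|.
Proof. by rewrite cmodE /= expr0n /= addr0 sqrtr_sqr. Qed.

Lemma cmod0 : cmod (0 : R[i]) = 0.
Proof. by rewrite (cmod_real 0) normr0. Qed.

Lemma cmod_eq0 z : cmod z = 0 -> z = 0.
Proof. by move=> h; apply/eqP; rewrite -normr_eq0 -cmod_normc h. Qed.

Lemma normRe_le_cmod z : `|cRe z| <= cmod z.
Proof. by rewrite cmodE -sqrtr_sqr ler_wsqrtr // lerDl sqr_ge0. Qed.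

Lemma normIm_le_cmod z : `|cIm z| <= cmod z.
Proof. by rewrite cmodE -sqrtr_sqr ler_wsqrtr // lerDr sqr_ge0. Qed.

Lemma Re_le_cmod z : cRe z <= cmod z.
Proof. exact: le_trans (ler_norm _) (normRe_le_cmod z). Qed.

Lemma ReD z w : cRe (z + w) = cRe z + cRe w.
Proof. by case: z; case: w. Qed.

Lemma ReB z w : cRe (z - w) = cRe z - cRe w.
Proof. by case: z; case: w. Qed.

Lemma ImB z w : cIm (z - w) = cIm z - cIm w.
Proof. by case: z; case: w. Qed.

Lemma ReMr k z : cRe (k%:C * z) = k * cRe z.
Proof. by case: z => a b /=; rewrite mul0r subr0. Qed.

Lemma Re_sum (T : Type) (r : seq T) (F : T -> R[i]) :
  cRe (\sum_(i <- r) F i) = \sum_(i <- r) cRe (F i).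
Proof.
elim: r => [|x r IH]; first by rewrite !big_nil.
by rewrite !big_cons ReD IH.
Qed.

(* Restated from [rmorphD] etc. so that they rewrite terms written [conjc z]. *)
Lemma conjcD z w : conjc (z + w) = conjc z + conjc w.
Proof. exact: rmorphD. Qed.

Lemma conjcB z w : conjc (z - w) = conjc z - conjc w.
Proof. exact: rmorphB. Qed.

Lemma conjcM z w : conjc (z * w) = conjc z * conjc w.
Proof. exact: rmorphM. Qed.

Lemma conjc_sum (T : Type) (r : seq T) (F : T -> R[i]) :
  conjc (\sum_(i <- r) F i) = \sum_(i <- r) conjc (F i).
Proof. exact: rmorph_sum. Qed.

Lemma real_ImE z : cIm z = 0 -> z = (cRe z)%:C.
Proof. by case: z => a b /= ->. Qed.

Lemma cmodD_sqr z w :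
  cmod (z + w) ^+ 2 = cmod z ^+ 2 + cmod w ^+ 2 + 2 * cRe (z * conjc w).
Proof.
by rewrite !cmod_sqr; case: z => a1 a2; case: w => b1 b2 /=; rewrite !expr2; ring.
Qed.

End ComplexFacts.

Section InnerProductSpace.
Variables (R : realType) (H : lmodType R[i]) (ip : H -> H -> R[i]).
Hypothesis hip : is_inner_product ip.
Local Notation nrm := (ipnorm ip).

Lemma ipDZl a x y z : ip (a *: x + y) z = a * ip x z + ip y z.
Proof. by case: hip. Qed.

Lemma ipC x y : ip x y = conjc (ip y x).
Proof. by case: hip. Qed.

Lemma ip_ge0 x : 0 <= ip x x.
Proof. by case: hip. Qed.

Lemma ip_eq0 x : ip x x = 0 -> x = 0.
Proof. by case: hip => _ _ _; apply. Qed.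

Lemma ip0l z : ip 0 z = 0.
Proof.
have := ipDZl 1 0 0 z; rewrite scaler0 addr0 mul1r => h.
by apply: (addrI (ip 0 z)); rewrite addr0 -h.
Qed.

Lemma ipDl x y z : ip (x + y) z = ip x z + ip y z.
Proof. by rewrite -[x in LHS]scale1r ipDZl mul1r. Qed.

Lemma ipZl a x z : ip (a *: x) z = a * ip x z.
Proof. by rewrite -[a *: x]addr0 ipDZl ip0l addr0. Qed.

Lemma ipBl x y z : ip (x - y) z = ip x z - ip y z.
Proof. by rewrite ipDl -scaleN1r ipZl mulN1r. Qed.

Lemma ip0r z : ip z 0 = 0.
Proof. by rewrite ipC ip0l conjc0. Qed.

Lemma ipDr x y z : ip z (x + y) = ip z x + ip z y.
Proof. by rewrite ipC ipDl conjcD -!ipC. Qed.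

Lemma ipZr a x z : ip z (a *: x) = conjc a * ip z x.
Proof. by rewrite ipC ipZl conjcM -ipC. Qed.

Lemma ipBr x y z : ip z (x - y) = ip z x - ip z y.
Proof. by rewrite ipC ipBl conjcB -!ipC. Qed.

Lemma ip_suml (T : Type) (r : seq T) (F : T -> H) z :
  ip (\sum_(i <- r) F i) z = \sum_(i <- r) ip (F i) z.
Proof.
elim: r => [|x r IH]; first by rewrite !big_nil ip0l.
by rewrite !big_cons ipDl IH.
Qed.

Lemma ip_sumr (T : Type) (r : seq T) (F : T -> H) z :
  ip z (\sum_(i <- r) F i) = \sum_(i <- r) ip z (F i).
Proof. by rewrite ipC ip_suml conjc_sum; apply: eq_bigr => i _; rewrite -ipC. Qed.

Lemma ipnorm_ge0 x : 0 <= nrm x.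
Proof. exact: sqrtr_ge0. Qed.

Lemma ipnorm_sqr x : nrm x ^+ 2 = cRe (ip x x).
Proof. by rewrite /ipnorm sqr_sqrtr //; have := ip_ge0 x; rewrite lecE => /andP[]. Qed.

Lemma ip_self x : ip x x = (nrm x ^+ 2)%:C.
Proof.
rewrite ipnorm_sqr; apply: real_ImE.
by have := ip_ge0 x; rewrite lecE => /andP[/eqP ->].
Qed.

Lemma ipnorm0 : nrm 0 = 0.
Proof. by rewrite /ipnorm ip0l sqrtr0. Qed.

Lemma ipnorm_eq0 x : nrm x = 0 -> x = 0.
Proof. by move=> h; apply: ip_eq0; rewrite ip_self h expr0n. Qed.

Lemma ipnormZ a x : nrm (a *: x) = cmod a * nrm x.
Proof.
apply/eqP; rewrite -(eqrXn2 (n := 2)) ?ipnorm_ge0 ?mulr_ge0 ?cmod_ge0 ?ipnorm_ge0 //.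
by rewrite ipnorm_sqr ipZl ipZr mulrA mulc_conj ip_self -rmorphM /= exprMn.
Qed.

Lemma ipnorm_distC x y : nrm (x - y) = nrm (y - x).
Proof.
by rewrite -[x - y]opprB -[- (y - x)]scaleN1r ipnormZ cmodN (cmod_real (1 : R)) normr1 mul1r.
Qed.

Lemma cauchy_schwarz x y : cmod (ip x y) <= nrm x * nrm y.
Proof.
have [y0|yn0] := eqVneq (nrm y) 0.
  by rewrite (ipnorm_eq0 y0) ip0r cmod0 ipnorm0 mulr0.
have c0 : 0 < nrm y ^+ 2 by rewrite exprn_gt0 // lt_def yn0 ipnorm_ge0.
set c := nrm y ^+ 2 in c0; set a := ip x y.
(* the projection of x orthogonal to y has nonnegative squared norm *)
have proj : ip (x - (a / c%:C) *: y) (x - (a / c%:C) *: y) = ip x x - (cmod a ^+ 2 / c)%:C.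
  rewrite ipBl !ipBr !ipZl !ipZr -/a (ipC y x) -/a (ip_self y) -/c.
  rewrite conjcM conjc_inv conjc_real [(_ / c)%:C]rmorphM /= -mulc_conj.
  by rewrite rmorphV ?unitfE ?gt_eqF //; field; apply/eqP => -[] /eqP; rewrite gt_eqF.
have := sqr_ge0 (nrm (x - (a / c%:C) *: y)).
rewrite ipnorm_sqr proj ReB /= -ipnorm_sqr.
rewrite subr_ge0 ler_pdivrMr // => h.
by rewrite -(@ler_pXn2r _ 2) ?nnegrE ?cmod_ge0 ?mulr_ge0 ?ipnorm_ge0 // exprMn.
Qed.

Lemma ipnormD_le x y : nrm (x + y) <= nrm x + nrm y.
Proof.
rewrite -(@ler_pXn2r _ 2) ?nnegrE ?addr_ge0 ?ipnorm_ge0 //.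
rewrite ipnorm_sqr ipDl !ipDr !ReD -!ipnorm_sqr sqrrD.
have := le_trans (Re_le_cmod _) (cauchy_schwarz x y).
have := le_trans (Re_le_cmod _) (cauchy_schwarz y x).
lra.
Qed.

Lemma ipnorm_dist_le x y z : nrm (x - z) <= nrm (x - y) + nrm (y - z).
Proof. by rewrite -[x - z](subrKA y) ipnormD_le. Qed.

End InnerProductSpace.

Section FsetSums.
Variables (T : choiceType) (V : nmodType).

Lemma sum_fset_indicator (J J' : {fset T}) (F : T -> V) : (J `<=` J')%fset ->
  \sum_(i <- J) F i = \sum_(i <- J') (if i \in J then F i else 0).
Proof.
move=> sJ; rewrite (eq_big_seq (fun i => if i \in J then F i else 0)); last by move=> i ->.
by apply: big_fset_incl sJ _ => x _ /negbTE ->.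
Qed.

Lemma sum_fsetD (J0 J : {fset T}) (F : T -> V) : (J0 `<=` J)%fset ->
  \sum_(i <- J) F i = \sum_(i <- J0) F i + \sum_(i <- (J `\` J0)%fset) F i.
Proof.
move=> sJ; rewrite (big_fsetID _ (fun x => x \in J0)) /=.
have -> : [fset x in J | x \in J0]%fset = J0.
  by apply/fsetP => x; rewrite !inE andb_idl // => /(fsubsetP sJ).
have -> // : [fset x in J | x \notin J0]%fset = (J `\` J0)%fset.
by apply/fsetP => x; rewrite !inE andbC.
Qed.

End FsetSums.

Lemma ler_sum_fsubset (T : choiceType) (R : realType) (J J' : {fset T}) (r : T -> R) :
  (forall i, 0 <= r i) -> (J `<=` J')%fset -> \sum_(i <- J) r i <= \sum_(i <- J') r i.
Proof.
move=> r0 sJ; rewrite (sum_fset_indicator r sJ); apply: ler_sum => i _.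
by case: ifP.
Qed.

Section UnconditionalSums.
Variables (R : realType) (H : lmodType R[i]) (ip : H -> H -> R[i]).
Hypothesis hip : is_inner_product ip.
Variable I : countType.
Local Notation nrm := (ipnorm ip).

Lemma eq_has_usum (x y : I -> H) l : x =1 y -> has_usum ip x l -> has_usum ip y l.
Proof. by move=> /funext ->. Qed.

Lemma eq_has_usumC (x y : I -> R[i]) l : x =1 y -> has_usumC x l -> has_usumC y l.
Proof. by move=> /funext ->. Qed.

Lemma has_usum_unique (x : I -> H) l1 l2 :
  has_usum ip x l1 -> has_usum ip x l2 -> l1 = l2.
Proof.
move=> h1 h2; apply/eqP; rewrite -subr_eq0; apply/eqP; apply: (ipnorm_eq0 hip).
apply: lt_all_pos_eq0 (ipnorm_ge0 _ _) _ => e e0.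
have e2 : 0 < e / 2 by rewrite divr_gt0.
have [J1 hJ1] := h1 _ e2; have [J2 hJ2] := h2 _ e2.
have := hJ1 (J1 `|` J2)%fset (fsubsetUl _ _).
have := hJ2 (J1 `|` J2)%fset (fsubsetUr _ _).
set S := \sum_(i <- _) _ => a b.
have := ipnorm_dist_le hip l1 S l2; rewrite (ipnorm_distC hip l1 S).
lra.
Qed.

Lemma has_usumC_unique (x : I -> R[i]) l1 l2 :
  has_usumC x l1 -> has_usumC x l2 -> l1 = l2.
Proof.
move=> h1 h2; apply/eqP; rewrite -subr_eq0; apply/eqP; apply: cmod_eq0.
apply: lt_all_pos_eq0 (cmod_ge0 _) _ => e e0.
have e2 : 0 < e / 2 by rewrite divr_gt0.
have [J1 hJ1] := h1 _ e2; have [J2 hJ2] := h2 _ e2.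
have := hJ1 (J1 `|` J2)%fset (fsubsetUl _ _).
have := hJ2 (J1 `|` J2)%fset (fsubsetUr _ _).
set S := \sum_(i <- _) _ => a b.
have := cmodD_le (l1 - S) (S - l2); rewrite addrA subrK cmod_distC.
lra.
Qed.

Lemma has_usumD (x y : I -> H) lx ly : has_usum ip x lx -> has_usum ip y ly ->
  has_usum ip (fun i => x i + y i) (lx + ly).
Proof.
move=> hx hy e e0.
have e2 : 0 < e / 2 by rewrite divr_gt0.
have [J1 hJ1] := hx _ e2; have [J2 hJ2] := hy _ e2.
exists (J1 `|` J2)%fset => J sJ.
have := hJ1 J (fsubset_trans (fsubsetUl _ _) sJ).
have := hJ2 J (fsubset_trans (fsubsetUr _ _) sJ).
have := ipnormD_le hip (\sum_(i <- J) x i - lx) (\sum_(i <- J) y i - ly).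
rewrite big_split /= addrACA -opprD.
lra.
Qed.

Lemma has_usumZ (x : I -> H) l a : has_usum ip x l ->
  has_usum ip (fun i => a *: x i) (a *: l).
Proof.
move=> h e e0.
have e' : 0 < e / (cmod a + 1) by rewrite divr_gt0 // ltr_wpDl ?cmod_ge0.
have [J0 hJ0] := h _ e'; exists J0 => J /hJ0.
rewrite -scaler_sumr -scalerBr ipnormZ // ltr_pdivlMr ?ltr_wpDl ?cmod_ge0 //.
have := cmod_ge0 a; have := ipnorm_ge0 ip (\sum_(i <- J) x i - l).
nra.
Qed.

Lemma has_usumN (x : I -> H) l : has_usum ip x l ->
  has_usum ip (fun i => - x i) (- l).
Proof.
move=> /(has_usumZ (-1)); rewrite scaleN1r.
by apply: eq_has_usum => i; rewrite scaleN1r.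
Qed.

Lemma has_usumC_add (x y : I -> R[i]) lx ly : has_usumC x lx -> has_usumC y ly ->
  has_usumC (fun i => x i + y i) (lx + ly).
Proof.
move=> hx hy e e0.
have e2 : 0 < e / 2 by rewrite divr_gt0.
have [J1 hJ1] := hx _ e2; have [J2 hJ2] := hy _ e2.
exists (J1 `|` J2)%fset => J sJ.
have := hJ1 J (fsubset_trans (fsubsetUl _ _) sJ).
have := hJ2 J (fsubset_trans (fsubsetUr _ _) sJ).
have := cmodD_le (\sum_(i <- J) x i - lx) (\sum_(i <- J) y i - ly).
rewrite big_split /= addrACA -opprD.
lra.
Qed.

Lemma has_usumC_sub (x y : I -> R[i]) lx ly : has_usumC x lx -> has_usumC y ly ->
  has_usumC (fun i => x i - y i) (lx - ly).
Proof.
move=> hx hy; apply: has_usumC_add hx _ => e /hy [J0 hJ0]; exists J0 => J /hJ0.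
by rewrite sumrN -opprD cmodN.
Qed.

Lemma has_usumC_conj (x : I -> R[i]) l : has_usumC x l ->
  has_usumC (fun i => conjc (x i)) (conjc l).
Proof.
move=> h e /h [J0 hJ0]; exists J0 => J /hJ0.
by rewrite -conjc_sum -conjcB cmod_conjc.
Qed.

Lemma has_usum_ipl (x : I -> H) l z : has_usum ip x l ->
  has_usumC (fun i => ip (x i) z) (ip l z).
Proof.
move=> h e e0.
have e' : 0 < e / (nrm z + 1) by rewrite divr_gt0 // ltr_wpDl ?ipnorm_ge0.
have [J0 hJ0] := h _ e'; exists J0 => J /hJ0.
rewrite -ip_suml // -ipBl // ltr_pdivlMr ?ltr_wpDl ?ipnorm_ge0 // => hJ.
apply: le_lt_trans (cauchy_schwarz hip _ _) _.
have := ipnorm_ge0 ip z; have := ipnorm_ge0 ip (\sum_(i <- J) x i - l).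
nra.
Qed.

Lemma has_usumC_real (r : I -> R) L : (forall i, 0 <= r i) ->
  has_usumC (fun i => (r i)%:C) L ->
  cIm L = 0 /\ forall J : {fset I}, \sum_(i <- J) r i <= cRe L.
Proof.
move=> r0 h; split.
  apply/eqP; rewrite -normr_eq0; apply/eqP.
  apply: lt_all_pos_eq0 => // e /h [J0 /(_ J0 (fsubset_refl _))].
  apply: le_lt_trans; apply: le_trans (normIm_le_cmod _).
  by rewrite ImB -rmorph_sum /= sub0r normrN.
move=> J; apply/ler_addgt0Pr => e /h [J0 hJ0].
have := hJ0 (J0 `|` J)%fset (fsubsetUl _ _).
move=> /ltW /(le_trans (Re_le_cmod _)); rewrite ReB -rmorph_sum /=.
have := ler_sum_fsubset r0 (fsubsetUr J0 J).
lra.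
Qed.

Lemma has_usumC_le (r : I -> R) L M :
  (forall J : {fset I}, \sum_(i <- J) r i <= M) ->
  has_usumC (fun i => (r i)%:C) L -> cRe L <= M.
Proof.
move=> hM h; apply/ler_addgt0Pr => e /h [J0].
move=> /(_ J0 (fsubset_refl _)) /ltW; rewrite cmod_distC.
move=> /(le_trans (Re_le_cmod _)); rewrite ReB -rmorph_sum /=.
have := hM J0.
lra.
Qed.

End UnconditionalSums.

Section FreeUltrafilterLimits.
Variables (R : realType) (p : set_system nat).
Hypothesis hp : free_ultrafilter p.

Lemma fu_setT : p setT. Proof. by case: hp => -[]. Qed.
Lemma fu_setI A B : p A -> p B -> p (A `&` B). Proof. by case: hp => _ h _ _ _; apply: h. Qed.
Lemma fu_sub A B : A `<=` B -> p A -> p B. Proof. by case: hp => _ _ h _ _; apply: h. Qed.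
Lemma fu_setC A : p A \/ p (~` A). Proof. by case: hp => _ _ _ h _; apply: h. Qed.
Lemma fu_finite A : finite_set A -> ~ p A. Proof. by case: hp => _ _ _ _ h; apply: h. Qed.

Lemma fu_nonempty A : p A -> exists n, A n.
Proof.
case: hp => -[_ p0] _ _ _ _ pA; apply: contrapT => hA; apply: p0.
by apply: fu_sub pA => n An; apply: hA; exists n.
Qed.

Lemma fu_cofinite (A : set nat) N : (forall n, (N <= n)%N -> A n) -> p A.
Proof.
move=> hA; case: (fu_setC A) => // pC; exfalso.
apply: (fu_finite (finite_II N)); apply: fu_sub pC => n /= nA.
by rewrite ltnNge; apply/negP => /hA.
Qed.

Definition is_plim (x : nat -> R) (c : R) : Prop :=
  forall e : R, 0 < e -> p [set n | `|x n - c| < e].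

Lemma is_plim_exists (x : nat -> R) M :
  (forall n, `|x n| <= M) -> exists c, is_plim x c.
Proof.
move=> hb.
(* the p-limit is the supremum of the c with x n >= c for p-almost all n *)
pose S := [set c : R | p [set n | c <= x n]].
have S_M : S (- M).
  by apply: fu_sub fu_setT => n _; have := hb n; rewrite ler_norml => /andP[].
have S_ub : ubound S M.
  move=> c /fu_nonempty [n hn]; apply: le_trans hn _.
  by have := hb n; rewrite ler_norml => /andP[].
have hS : has_sup S by split; [exists (- M) | exists M].
exists (sup S) => e e0.
have [c Sc hc] := sup_adherent e0 hS.
have p1 : p [set n | sup S - e < x n].
  by apply: fu_sub Sc => n /= h; apply: lt_le_trans hc h.
have p2 : p [set n | x n < sup S + e].
  case: (fu_setC [set n | x n < sup S + e]) => // pC; exfalso.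
  have : S (sup S + e) by apply: fu_sub pC => n /= /negP; rewrite -leNgt.
  by move/(sup_upper_bound hS); lra.
apply: fu_sub (fu_setI p1 p2) => n /= [h1 h2].
by rewrite ltr_norml; apply/andP; split; lra.
Qed.

Lemma is_plim_unique (x : nat -> R) c1 c2 : is_plim x c1 -> is_plim x c2 -> c1 = c2.
Proof.
move=> h1 h2; apply/eqP; rewrite -subr_eq0 -normr_eq0; apply/eqP.
apply: lt_all_pos_eq0 => // e e0.
have e2 : 0 < e / 2 by rewrite divr_gt0.
have [n [/= hn1 hn2]] := fu_nonempty (fu_setI (h1 _ e2) (h2 _ e2)).
have := ler_normB (x n - c2) (x n - c1).
have -> : x n - c2 - (x n - c1) = c1 - c2 by ring.
lra.
Qed.

Lemma plimP (x : nat -> R) M : (forall n, `|x n| <= M) -> is_plim x (plim p x).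
Proof. by move=> hb; apply: xgetPex; apply: is_plim_exists hb. Qed.

Lemma plim_eq (x : nat -> R) c : is_plim x c -> plim p x = c.
Proof. by move=> hc; apply: xget_unique => // c' /is_plim_unique; apply. Qed.

Lemma plimD (x y : nat -> R) Mx My :
  (forall n, `|x n| <= Mx) -> (forall n, `|y n| <= My) ->
  plim p (fun n => x n + y n) = plim p x + plim p y.
Proof.
move=> hx hy; apply: plim_eq => e e0.
have e2 : 0 < e / 2 by rewrite divr_gt0.
apply: fu_sub (fu_setI (plimP hx e2) (plimP hy e2)) => n /= [h1 h2].
have := ler_normD (x n - plim p x) (y n - plim p y).
rewrite addrACA -opprD.
lra.
Qed.

Lemma plimN (x : nat -> R) M : (forall n, `|x n| <= M) ->
  plim p (fun n => - x n) = - plim p x.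
Proof.
move=> hx; apply: plim_eq => e /(plimP hx); apply: fu_sub => n /=.
by rewrite -opprD normrN.
Qed.

Lemma plimB (x y : nat -> R) Mx My :
  (forall n, `|x n| <= Mx) -> (forall n, `|y n| <= My) ->
  plim p (fun n => x n - y n) = plim p x - plim p y.
Proof.
move=> hx hy; rewrite (plimD (y := fun n => - y n) hx (My := My)) ?(plimN hy) //.
by move=> n; rewrite normrN.
Qed.

Lemma plim_ge (x : nat -> R) M c : (forall n, `|x n| <= M) ->
  p [set n | c <= x n] -> c <= plim p x.
Proof.
move=> hb hc; rewrite leNgt; apply/negP => hlt.
have e0 : 0 < c - plim p x by rewrite subr_gt0.
have [n [/= h1]] := fu_nonempty (fu_setI hc (plimP hb e0)).
by rewrite ltr_norml => /andP[_ h2]; lra.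
Qed.

End FreeUltrafilterLimits.

Lemma free_ultrafilter_frequently (A : set nat) :
  (forall N, exists n, (N <= n)%N /\ A n) -> exists q : Nstar, proj1_sig q A.
Proof.
move=> hA.
pose F := [set B : set nat | exists N, forall n, (N <= n)%N -> A n -> B n].
have FF : ProperFilter F.
  split.
    by move=> [N hN]; have [n [hn An]] := hA N; exact: hN n hn An.
  split.
  - by exists 0%N.
  - move=> B C [N1 h1] [N2 h2]; exists (maxn N1 N2) => n; rewrite geq_max.
    by move=> /andP[n1 n2] An; split; [apply: h1 | apply: h2].
  - by move=> B C BC [N h]; exists N => n hn An; apply/BC/h.
have [G [UG FG]] := ultraFilterLemma FF.
have PG : ProperFilter G by apply: ultra_proper.
have fG : free_ultrafilter G.
  split.
  - by split; [exact: filterT | exact: filter_not_empty].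
  - by move=> B C; apply: filterI.
  - by move=> B C; apply: filterS.
  - by move=> B; apply: in_ultra_setVsetC.
  - move=> S /finite_fsetP [X eX] GS.
    have GC : G (~` S).
      apply: FG; exists (\max_(k <- X) k).+1 => n hn _; rewrite eX /= => nX.
      have : (n <= \max_(k <- X) k)%N by apply: leq_bigmax_seq.
      by rewrite leqNgt hn.
    by apply: (filter_not_empty G); apply: filterS (filterI GS GC) => n [].
by exists (exist _ G fG); apply: FG; exists 0%N.
Qed.

Lemma eventually_all_fu (A : set nat) :
  (exists N, forall n, (N <= n)%N -> A n) <-> forall q : Nstar, proj1_sig q A.
Proof.
split=> [[N hN] [q hq] /=|hA]; first exact: (fu_cofinite hq hN).
apply: contrapT => hne.
have [[q hq] /= qC] : exists q : Nstar, proj1_sig q (~` A).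
  apply: free_ultrafilter_frequently => N; apply: contrapT => hN; apply: hne.
  by exists N => n hn; apply: contrapT => An; apply: hN; exists n.
have [n [] //] := fu_nonempty hq (fu_setI hq (hA (exist _ q hq)) qC).
Qed.

Section PlimCharacterizations.
Variables (R : realType) (z : nat -> R) (M : R).
Hypothesis z_bounded : forall n, `|z n| <= M.

Let plim_bounded (q : Nstar) : is_plim (proj1_sig q) z (plim (proj1_sig q) z).
Proof. exact: (plimP (proj2_sig q) z_bounded). Qed.

Lemma plim_eq0P : (forall q : Nstar, plim (proj1_sig q) z = 0) <-> z @ \oo --> (0 : R).
Proof.
split=> [h|/cvgrPdist_lt h q].
  have plim0 (q : Nstar) : is_plim (proj1_sig q) z 0 by rewrite -(h q).
  apply/cvgrPdist_lt => e e0.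
  have [N hN] := (eventually_all_fu [set n | `|z n - 0| < e]).2 (fun q => plim0 q e e0).
  by exists N => // n /hN /=; rewrite subr0 sub0r normrN.
apply: (plim_eq (proj2_sig q)) => e /h [N _ hN].
have ev : exists N, forall n, (N <= n)%N -> `|z n - 0| < e.
  by exists N => n /hN /=; rewrite subr0 sub0r normrN.
exact: (eventually_all_fu [set n | `|z n - 0| < e]).1 ev q.
Qed.

Lemma plim_ge0P : (forall q : Nstar, 0 <= plim (proj1_sig q) z) <->
  (forall e, 0 < e -> exists N, forall n, (N <= n)%N -> - e <= z n).
Proof.
split=> [h e e0|h q].
  apply: (eventually_all_fu [set n | - e <= z n]).2 => q.
  apply: (fu_sub (proj2_sig q) _ (plim_bounded q e0)) => n /=.
  by rewrite ltr_norml => /andP[+ _]; have := h q; lra.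
apply/ler_addgt0Pr => e /h.
move/(eventually_all_fu [set n | - e <= z n]).1 => /(_ q) qe.
by rewrite -lerBlDr sub0r; apply: (plim_ge (proj2_sig q) z_bounded qe).
Qed.

End PlimCharacterizations.

Lemma limn_einf_ge0P (R : realType) (z : nat -> R) :
  (0 <= limn_einf (fun n => (z n)%:E))%E <->
  (forall e, 0 < e -> exists N, forall n, (N <= n)%N -> - e <= z n).
Proof.
rewrite limn_einf_lim; split=> [h e e0|h].
  apply: contrapT => hne.
  have : (limn (einfs (fun n => (z n)%:E)) <= (- e)%:E)%E.
    apply: lime_le; first exact: is_cvg_einfs.
    exists 0%N => // N _; apply: ge_ereal_inf; apply: contrapT => hN; apply: hne.
    exists N => n hn; rewrite -lee_fin; apply: contrapT => /negP; rewrite -ltNge => hlt.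
    by apply: hN; exists (z n)%:E => //; [exists n | apply: ltW].
  by move=> /(le_trans h); rewrite lee_fin; lra.
have lim_ge e : 0 < e -> ((- e)%:E <= limn (einfs (fun n => (z n)%:E)))%E.
  move=> e0; have [N hN] := h e e0.
  apply: lime_ge; first exact: is_cvg_einfs.
  exists N => // n /= hn; apply: le_ereal_inf_tmp => _ [k /= hk <-].
  by rewrite lee_fin; apply: hN; apply: leq_trans hk.
move: lim_ge; case: (limn _) => [r| |] lim_ge //; last by have := lim_ge 1 ltr01.
rewrite lee_fin; apply/ler_addgt0Pr => e e0.
by rewrite -lerBlDr sub0r -lee_fin lim_ge.
Qed.

Section ClosedSpan.
Variables (R : realType) (H : lmodType R[i]) (ip : H -> H -> R[i]).
Hypothesis hip : is_inner_product ip.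
Variables (I : countType) (f : I -> H).
Local Notation nrm := (ipnorm ip).
Local Notation W := (closed_span ip f).

Lemma lin_span_comb g1 g2 a : lin_span f g1 -> lin_span f g2 -> lin_span f (g1 + a *: g2).
Proof.
move=> [J1 [c1 ->]] [J2 [c2 ->]]; exists (J1 `|` J2)%fset.
exists (fun j => (if j \in J1 then c1 j else 0) + a * (if j \in J2 then c2 j else 0)).
rewrite (sum_fset_indicator _ (fsubsetUl J1 J2)) (sum_fset_indicator _ (fsubsetUr J1 J2)).
rewrite scaler_sumr -big_split /=; apply: eq_bigr => j _.
rewrite scalerDl -scalerA.
by case: (j \in J1); case: (j \in J2); rewrite ?scale0r ?mulr0 ?scaler0 ?add0r ?addr0.
Qed.

Lemma closed_span_lin_span g : lin_span f g -> W g.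
Proof. by move=> hg e e0; exists g; rewrite subrr ipnorm0. Qed.

Lemma closed_span0 : W 0.
Proof. by apply: closed_span_lin_span; exists fset0, (fun=> 0); rewrite big_seq_fset0. Qed.

Lemma closed_span_gen i : W (f i).
Proof.
by apply: closed_span_lin_span; exists [fset i]%fset, (fun=> 1); rewrite big_seq_fset1 scale1r.
Qed.

Lemma closed_span_comb x y a : W x -> W y -> W (x + a *: y).
Proof.
move=> hx hy e e0.
have e2 : 0 < e / 2 by rewrite divr_gt0.
have ea : 0 < e / 2 / (cmod a + 1) by rewrite divr_gt0 // ltr_wpDl ?cmod_ge0.
have [g1 [s1 h1]] := hx _ e2; have [g2 [s2]] := hy _ ea.
rewrite ltr_pdivlMr ?ltr_wpDl ?cmod_ge0 // => h2.
exists (g1 + a *: g2); split; first exact: lin_span_comb.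
rewrite opprD addrACA -scalerBr; apply: le_lt_trans (ipnormD_le hip _ _) _.
rewrite ipnormZ //; have := cmod_ge0 a; have := ipnorm_ge0 ip (y - g2).
nra.
Qed.

Lemma closed_spanB x y : W x -> W y -> W (x - y).
Proof. by move=> hx hy; rewrite -scaleN1r; apply: closed_span_comb. Qed.

Lemma closed_span_closure h : (forall e, 0 < e -> exists g, W g /\ nrm (h - g) < e) -> W h.
Proof.
move=> hh e e0.
have e2 : 0 < e / 2 by rewrite divr_gt0.
have [g [Wg hg]] := hh _ e2; have [g' [s' hg']] := Wg _ e2.
exists g'; split => //; apply: le_lt_trans (ipnorm_dist_le hip h g g') _.
lra.
Qed.

Lemma closed_span_usum (c : I -> R[i]) l : has_usum ip (fun j => c j *: f j) l -> W l.
Proof.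
move=> h e /h [J0 /(_ J0 (fsubset_refl _)) hJ0].
by exists (\sum_(j <- J0) c j *: f j); split; [exists J0, c | rewrite ipnorm_distC].
Qed.

End ClosedSpan.

Section FrameOperatorBasics.
Variables (R : realType) (H : lmodType R[i]) (ip : H -> H -> R[i]).
Hypothesis hip : is_inner_product ip.
Variables (I : countType) (f : I -> H).

Lemma frame_opE g l : has_usum ip (fun j => ip g (f j) *: f j) l -> frame_op ip f g = l.
Proof. by move=> h; apply: xget_unique => // y /has_usum_unique; apply. Qed.

Lemma frame_opP g : (exists l, has_usum ip (fun j => ip g (f j) *: f j) l) ->
  has_usum ip (fun j => ip g (f j) *: f j) (frame_op ip f g).
Proof. by move=> [l hl]; rewrite (frame_opE hl). Qed.

Lemma has_usum_frame_ip g l : has_usum ip (fun j => ip g (f j) *: f j) l ->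
  has_usumC (fun j => (cmod (ip g (f j)) ^+ 2)%:C) (ip l g).
Proof.
move=> /(has_usum_ipl hip g); apply: eq_has_usumC => j.
by rewrite (ipZl hip) (ipC hip (f j) g) mulc_conj.
Qed.

Lemma ip_expansion_real g i : has_usum ip (fun j => ip g (f j) *: f j) (f i) ->
  ip (f i) g = (cRe (ip (f i) g))%:C /\ 0 <= cRe (ip (f i) g) <= 1.
Proof.
move=> /has_usum_frame_ip /(has_usumC_real (fun j => sqr_ge0 _)) [/real_ImE hx hle].
split => //; have := hle [fset i]%fset; rewrite big_seq_fset1.
rewrite (ipC hip g (f i)) cmod_conjc hx cmod_real real_normK ?num_real //.
set x := cRe _ => h1; have x0 : 0 <= x by exact: le_trans (sqr_ge0 _) h1.
by rewrite x0 /=; nra.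
Qed.

Lemma ip_canonical_dual_bound i : 0 <= cRe (ip (f i) (canonical_dual ip f i)) <= 1.
Proof.
(* if [canonical_dual] or [frame_op] fall back on their junk value 0, so does the product *)
rewrite /canonical_dual.
have [exg|nexg] := pselect (exists g, closed_span ip f g /\ frame_op ip f g = f i); last first.
  by rewrite xgetPN ?(ip0r hip) ?lexx ?ler01 // => g hg; apply: nexg; exists g.
have [_] := xgetPex 0 exg; set g := xget _ _ => Tg.
have [ex|nex] := pselect (exists l, has_usum ip (fun j => ip g (f j) *: f j) l).
  by have := frame_opP ex; rewrite Tg => /ip_expansion_real [].
move: Tg; rewrite /frame_op xgetPN => [<-|l hl]; last by apply: nex; exists l.
by rewrite (ip0l hip) lexx ler01.
Qed.

End FrameOperatorBasics.

Lemma exists_inv_succ_lt (R : realType) (e : R) : 0 < e -> exists k : nat, 1 / k.+1%:R < e.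
Proof.
move=> e0; exists (Num.truncn (1 / e)).
by rewrite ltr_pdivrMr ?ltr0n // mulrC -ltr_pdivrMr // truncnS_gt.
Qed.

Lemma exprn_lt_eventually (R : realType) (s e : R) : 0 <= s < 1 -> 0 < e ->
  exists N, forall n, (N <= n)%N -> s ^+ n < e.
Proof.
move=> /andP[s0 s1] e0; have hs : `|s| < 1 by rewrite ger0_norm.
have [N _ hN] := (cvgrPdist_lt _ _).1 (cvg_geometric 1 hs) e e0.
exists N => n /hN; rewrite /= sub0r normrN mul1r.
by rewrite ger0_norm // exprn_ge0.
Qed.

Lemma amgm2 (R : realType) (a b B : R) : 0 < B -> a * b <= (B * a ^+ 2 + b ^+ 2 / B) / 2.
Proof.
move=> B0; rewrite -subr_ge0.
have -> : (B * a ^+ 2 + b ^+ 2 / B) / 2 - a * b = (B * a - b) ^+ 2 / (2 * B).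
  by field; rewrite gt_eqF.
by rewrite divr_ge0 ?sqr_ge0 // mulr_ge0 // ltW.
Qed.

Section FiniteSums.
Variables (R : realType) (I : countType) (r : I -> R).

Lemma esum_ge_fsum (J : {fset I}) :
  ((\sum_(j <- J) r j)%:E <= \esum_(i in [set: I]) (r i)%:E)%E.
Proof.
apply: esum_ge; exists [set` J]; first by split => //; exact: finite_fset.
by rewrite -(fsbig_seq _ _ (fset_uniq J)) sumEFin.
Qed.

Lemma esum_gt_fsum x : (x%:E < \esum_(i in [set: I]) (r i)%:E)%E ->
  exists J : {fset I}, x < \sum_(j <- J) r j.
Proof.
move=> /ereal_sup_gt [y [X [fX _] <-] hy]; have [J eJ] := finite_fsetP.1 fX.
by exists J; move: hy; rewrite eJ -(fsbig_seq _ _ (fset_uniq J)) sumEFin lte_fin.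
Qed.

Lemma fsum_tail_small M : (forall J : {fset I}, \sum_(i <- J) r i <= M) ->
  forall e, 0 < e -> exists J0 : {fset I}, forall J : {fset I},
    \sum_(i <- (J `\` J0)%fset) r i <= e.
Proof.
move=> hM e e0; apply: contrapT => hne.
have step J0 : exists J, e < \sum_(i <- (J `\` J0)%fset) r i.
  apply: contrapT => hJ; apply: hne; exists J0 => J.
  by rewrite leNgt; apply/negP => hlt; apply: hJ; exists J.
(* disjoint chunks of mass > e accumulate beyond any bound *)
have big k : exists J : {fset I}, k%:R * e <= \sum_(i <- J) r i.
  elim: k => [|k [J hJ]]; first by exists fset0; rewrite mul0r big_seq_fset0.
  have [J' hJ'] := step J; exists (J `|` J')%fset.
  rewrite (sum_fsetD _ (fsubsetUl J J')).
  have -> : ((J `|` J') `\` J)%fset = (J' `\` J)%fset.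
    by apply/fsetP => x; rewrite !inE; case: (x \in J); rewrite ?andbF ?andbT.
  by rewrite -addn1 natrD mulrDl mul1r; apply: lerD => //; exact: ltW.
have [k hk] : exists k : nat, M / e < k%:R by exists (Num.truncn (M / e)).+1; apply: truncnS_gt.
have [J hJ] := big k; have := hM J.
rewrite ltr_pdivrMr // in hk.
lra.
Qed.

End FiniteSums.

Lemma has_usum_ipnorm_le (R : realType) (H : lmodType R[i]) (ip : H -> H -> R[i])
    (I : countType) (x : I -> H) l K :
  is_inner_product ip -> has_usum ip x l ->
  (forall J : {fset I}, ipnorm ip (\sum_(i <- J) x i) <= K) -> ipnorm ip l <= K.
Proof.
move=> hip hl hK; apply/ler_addgt0Pr => e /hl [J0].
move=> /(_ J0 (fsubset_refl _)) h1; have := hK J0.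
have := ipnormD_le hip (\sum_(i <- J0) x i) (l - \sum_(i <- J0) x i).
rewrite addrC subrK (ipnorm_distC hip l).
lra.
Qed.

Section CompleteSpace.
Variables (R : realType) (H : lmodType R[i]) (ip : H -> H -> R[i]).
Hypotheses (hip : is_inner_product ip) (hcomp : ip_complete ip).
Variable I : countType.
Local Notation nrm := (ipnorm ip).

Lemma has_usum_cauchy (x : I -> H) :
  (forall e, 0 < e -> exists J0 : {fset I}, forall J : {fset I}, (J0 `<=` J)%fset ->
     nrm (\sum_(i <- J) x i - \sum_(i <- J0) x i) < e) ->
  exists l, has_usum ip x l.
Proof.
move=> hc.
have hck k : exists J0 : {fset I}, forall J : {fset I}, (J0 `<=` J)%fset ->
    nrm (\sum_(i <- J) x i - \sum_(i <- J0) x i) < 1 / k.+1%:R.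
  by apply: hc; rewrite divr_gt0 ?ltr0n.
have [J0 hJ0] := choice hck.
pose fix K k : {fset I} := if k is k'.+1 then (K k' `|` J0 k)%fset else J0 0%N.
have KJ k m : (k <= m)%N -> (J0 k `<=` K m)%fset.
  elim: m => [|m IH]; first by rewrite leqn0 => /eqP ->.
  rewrite leq_eqVlt => /orP[/eqP ->|]; first exact: fsubsetUr.
  by rewrite ltnS => /IH h; apply: fsubset_trans h (fsubsetUl _ _).
pose u m := \sum_(i <- K m) x i.
have uc k m : (k <= m)%N -> nrm (u m - \sum_(i <- J0 k) x i) < 1 / k.+1%:R.
  by move=> /KJ; apply: hJ0.
have [l hl] : exists l, ip_cvg ip u l.
  apply: hcomp => e e0; have e2 : 0 < e / 2 by rewrite divr_gt0.
  have [k hk] := exists_inv_succ_lt e2; exists k => m n km kn.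
  apply: le_lt_trans (ipnorm_dist_le hip _ (\sum_(i <- J0 k) x i) _) _.
  have := uc k m km; have := uc k n kn; rewrite (ipnorm_distC hip (\sum_(i <- J0 k) x i)).
  by move: hk; set t := 1 / _; lra.
exists l => e e0; have e3 : 0 < e / 3 by rewrite divr_gt0.
have [k hk] := exists_inv_succ_lt e3; have [N hN] := hl _ e3.
exists (J0 k) => J /hJ0 h1.
have h2 := uc k (maxn k N) (leq_maxl _ _); have h3 := hN (maxn k N) (leq_maxr _ _).
apply: le_lt_trans (ipnorm_dist_le hip _ (\sum_(i <- J0 k) x i) _) _.
apply: le_lt_trans (lerD (lexx _) (ipnorm_dist_le hip _ (u (maxn k N)) _)) _.
rewrite (ipnorm_distC hip (\sum_(i <- J0 k) x i)).
by move: hk h1 h2; set t := 1 / _; lra.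
Qed.

End CompleteSpace.

Section FrameBounds.
Variables (R : realType) (H : lmodType R[i]) (ip : H -> H -> R[i]).
Hypothesis hip : is_inner_product ip.
Variables (I : countType) (f : I -> H).
Local Notation nrm := (ipnorm ip).
Local Notation W := (closed_span ip f).

Definition synthesis_bound (B : R) : Prop := forall (J : {fset I}) (c : I -> R[i]),
  nrm (\sum_(j <- J) c j *: f j) ^+ 2 <= B * \sum_(j <- J) cmod (c j) ^+ 2.

(* A |h|^2 <= sum_j |<h, f_j>|^2, with the series read as the supremum of its partial sums *)
Definition lower_frame_bound (A : R) : Prop := forall h, W h -> forall e, 0 < e ->
  exists J : {fset I}, A * nrm h ^+ 2 - e <= \sum_(j <- J) cmod (ip h (f j)) ^+ 2.

Definition frame_bounds (A B : R) : Prop :=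
  [/\ 0 < A, A <= B, synthesis_bound B & lower_frame_bound A].

Lemma lower_frame_bound_le A A' : A' <= A -> lower_frame_bound A -> lower_frame_bound A'.
Proof.
move=> AA' hA h Wh e /(hA h Wh) [J hJ]; exists J.
by apply: le_trans hJ; rewrite lerD2r ler_wpM2r ?sqr_ge0.
Qed.

Lemma frame_bounds_min A B : 0 < A -> 0 < B ->
  synthesis_bound B -> lower_frame_bound A -> frame_bounds (Num.min A B) B.
Proof.
move=> A0 B0 hB hA; split => //; first by rewrite lt_min A0 B0.
  by rewrite ge_min lexx orbT.
by apply: lower_frame_bound_le hA; rewrite ge_min lexx.
Qed.

Lemma synthesis_bound_of_bessel B : 0 < B ->
  (forall h (J : {fset I}), W h -> \sum_(j <- J) cmod (ip h (f j)) ^+ 2 <= B * nrm h ^+ 2) ->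
  synthesis_bound B.
Proof.
move=> B0 hbessel J c; set v := \sum_(j <- J) c j *: f j.
have Wv : W v by apply: (closed_span_lin_span hip); exists J, c.
set Sd := \sum_(j <- J) cmod (ip v (f j)) ^+ 2.
set Sc := \sum_(j <- J) cmod (c j) ^+ 2.
(* |v|^2 = sum_j c_j <v, f_j>^*, then AM-GM term by term *)
have h1 : nrm v ^+ 2 <= \sum_(j <- J) cmod (c j) * cmod (ip v (f j)).
  rewrite (ipnorm_sqr hip) {2}/v (ip_sumr hip) Re_sum; apply: ler_sum => j _.
  by rewrite (ipZr hip); apply: le_trans (Re_le_cmod _) _; rewrite cmodM cmod_conjc.
have h2 : \sum_(j <- J) cmod (c j) * cmod (ip v (f j)) <= (B * Sc + Sd / B) / 2.
  apply: (@le_trans _ _ (\sum_(j <- J)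
    ((B * cmod (c j) ^+ 2 + cmod (ip v (f j)) ^+ 2 / B) / 2))).
    by apply: ler_sum => j _; apply: amgm2.
  by rewrite -mulr_suml big_split /= -mulr_sumr -mulr_suml.
have h3 : Sd / B <= nrm v ^+ 2 by rewrite ler_pdivrMr // mulrC hbessel.
lra.
Qed.

Lemma is_frame_bounds : is_frame ip f -> exists A B, frame_bounds A B.
Proof.
move=> [A [B [A0 B0 hAB]]]; exists (Num.min A B), B; apply: frame_bounds_min => //.
  apply: synthesis_bound_of_bessel => // h J Wh; rewrite -lee_fin.
  exact: le_trans (esum_ge_fsum _ J) (hAB h Wh).2.
move=> h Wh e e0.
have : ((A * nrm h ^+ 2 - e)%:E < \esum_(i in [set: I]) (cmod (ip h (f i)) ^+ 2)%:E)%E.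
  by apply: lt_le_trans (hAB h Wh).1; rewrite lte_fin ltrBlDr ltrDl.
by move=> /esum_gt_fsum [J /ltW]; exists J.
Qed.

End FrameBounds.

Section FrameOperator.
Variables (R : realType) (H : lmodType R[i]) (ip : H -> H -> R[i]).
Hypotheses (hip : is_inner_product ip) (hcomp : ip_complete ip).
Variables (I : countType) (f : I -> H) (A B : R).
Hypothesis hAB : frame_bounds ip f A B.
Local Notation nrm := (ipnorm ip).
Local Notation W := (closed_span ip f).
Local Notation T := (frame_op ip f).
Local Notation Q h := (cRe (ip (frame_op ip f h) h)).

Let A_gt0 : 0 < A. Proof. by case: hAB. Qed.
Let A_le_B : A <= B. Proof. by case: hAB. Qed.
Let B_gt0 : 0 < B. Proof. exact: lt_le_trans A_gt0 A_le_B. Qed.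
Let synthesis : synthesis_bound ip f B. Proof. by case: hAB. Qed.
Let lower : lower_frame_bound ip f A. Proof. by case: hAB. Qed.

Lemma bessel_bound h (J : {fset I}) :
  \sum_(j <- J) cmod (ip h (f j)) ^+ 2 <= B * nrm h ^+ 2.
Proof.
set S := \sum_(j <- J) _; set v := \sum_(j <- J) ip h (f j) *: f j.
have S0 : 0 <= S by apply: sumr_ge0 => j _; exact: sqr_ge0.
have hv : ip h v = S%:C.
  rewrite /v (ip_sumr hip) /S rmorph_sum; apply: eq_bigr => j _.
  by rewrite (ipZr hip) mulrC mulc_conj.
have h1 : S <= nrm h * nrm v.
  by apply: le_trans (cauchy_schwarz hip h v); rewrite hv cmod_real ger0_norm.
have h2 : nrm v ^+ 2 <= B * S := synthesis J (fun j => ip h (f j)).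
have h3 : S * S <= nrm h ^+ 2 * (B * S).
  apply: le_trans (_ : (nrm h * nrm v) ^+ 2 <= _).
    by rewrite -expr2 ler_pXn2r ?nnegrE ?mulr_ge0 ?ipnorm_ge0.
  by rewrite exprMn ler_wpM2l // sqr_ge0.
have [->|Sp] := eqVneq S 0; first by rewrite mulr_ge0 ?sqr_ge0 // ltW.
have Sp' : 0 < S by rewrite lt_def Sp S0.
by rewrite mulrC -(ler_pM2r Sp') -mulrA.
Qed.

Lemma frame_series_exists h : exists l, has_usum ip (fun j => ip h (f j) *: f j) l.
Proof.
apply: (has_usum_cauchy hip hcomp) => e e0.
have ee : 0 < e ^+ 2 / (2 * B) by rewrite divr_gt0 ?mulr_gt0 ?exprn_gt0.
have [J0 hJ0] := fsum_tail_small (@bessel_bound h) ee.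
exists J0 => J sJ; rewrite (sum_fsetD _ sJ) addrC addKr.
have := synthesis (J `\` J0)%fset (fun j => ip h (f j)).
set n := nrm _ => h1; have n0 : 0 <= n by apply: ipnorm_ge0.
have h2 : n ^+ 2 <= e ^+ 2 / 2.
  apply: le_trans h1 _.
  have -> : e ^+ 2 / 2 = B * (e ^+ 2 / (2 * B)) by field; rewrite gt_eqF.
  by rewrite ler_wpM2l // ltW.
rewrite -(ltr_pXn2r (n := 2)) ?nnegrE ?(ltW e0) //; apply: le_lt_trans h2 _.
have : 0 < e ^+ 2 by rewrite exprn_gt0.
lra.
Qed.

Lemma has_usum_frame_op h : has_usum ip (fun j => ip h (f j) *: f j) (T h).
Proof. exact: frame_opP (frame_series_exists h). Qed.

Lemma closed_span_frame_op h : W (T h).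
Proof. exact: closed_span_usum (has_usum_frame_op h). Qed.

Lemma frame_op_linear x y a : T (x + a *: y) = T x + a *: T y.
Proof.
apply: (frame_opE hip).
apply: eq_has_usum (has_usumD hip (has_usum_frame_op x) (has_usumZ hip a (has_usum_frame_op y))).
by move=> j; rewrite (ipDl hip) (ipZl hip) scalerDl scalerA.
Qed.

Lemma frame_opB x y : T (x - y) = T x - T y.
Proof. by rewrite -[in LHS]scaleN1r frame_op_linear scaleN1r. Qed.

Lemma frame_op0 : T 0 = 0.
Proof. by have := frame_opB 0 0; rewrite !subrr. Qed.

Lemma frame_form_spec h : ip (T h) h = (Q h)%:C /\
  forall J : {fset I}, \sum_(j <- J) cmod (ip h (f j)) ^+ 2 <= Q h.
Proof.
have := has_usum_frame_ip hip (has_usum_frame_op h).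
by move=> /(has_usumC_real (fun j => sqr_ge0 _)) [/real_ImE].
Qed.

Lemma frame_form_le h : Q h <= B * nrm h ^+ 2.
Proof.
exact: has_usumC_le (@bessel_bound h) (has_usum_frame_ip hip (has_usum_frame_op h)).
Qed.

Lemma frame_form_lower h : W h -> A * nrm h ^+ 2 <= Q h.
Proof.
move=> Wh; apply/ler_addgt0Pr => e /(lower Wh) [J hJ].
by have := (frame_form_spec h).2 J; lra.
Qed.

Lemma frame_op_norm_sqr h : nrm (T h) ^+ 2 <= B * Q h.
Proof.
have Q0 : 0 <= Q h by apply: le_trans ((frame_form_spec h).2 fset0); rewrite big_seq_fset0.
rewrite -[B * Q h]sqr_sqrtr ?mulr_ge0 ?(ltW B_gt0) //.
rewrite ler_pXn2r ?nnegrE ?ipnorm_ge0 ?sqrtr_ge0 //.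
apply: (has_usum_ipnorm_le hip (has_usum_frame_op h)) => J.
rewrite -[nrm _]ger0_norm ?ipnorm_ge0 // -sqrtr_sqr ler_wsqrtr //.
apply: le_trans (synthesis J _) _.
by rewrite ler_wpM2l ?(ltW B_gt0) // ((frame_form_spec h).2 J).
Qed.

Lemma frame_op_norm_le h : nrm (T h) <= B * nrm h.
Proof.
rewrite -(ler_pXn2r (n := 2)) ?nnegrE ?ipnorm_ge0 ?mulr_ge0 ?ipnorm_ge0 ?(ltW B_gt0) //.
apply: le_trans (frame_op_norm_sqr h) _; rewrite exprMn expr2 -mulrA.
by rewrite ler_wpM2l ?(ltW B_gt0) // frame_form_le.
Qed.

End FrameOperator.

Lemma geometric_increments_cauchy (R : realType) (H : lmodType R[i])
    (ip : H -> H -> R[i]) (u : nat -> H) (s c : R) :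
  is_inner_product ip -> 0 <= s < 1 ->
  (forall k, ipnorm ip (u k.+1 - u k) <= c * s ^+ k) -> ip_cauchy ip u.
Proof.
move=> hip s01 hu; have /andP[s0 s1] := s01.
have c0 : 0 <= c.
  by have := le_trans (ipnorm_ge0 ip _) (hu 0%N); rewrite expr0 mulr1.
have s1' : 0 < 1 - s by rewrite subr_gt0.
set C := c / (1 - s); have C0 : 0 <= C by rewrite divr_ge0 // ltW.
have dist n j : ipnorm ip (u (n + j)%N - u n) <= C * (s ^+ n - s ^+ (n + j)).
  elim: j => [|j IH]; first by rewrite addn0 !subrr (ipnorm0 hip) mulr0.
  rewrite addnS; apply: le_trans (ipnorm_dist_le hip _ (u (n + j)%N) _) _.
  rewrite exprS; move: IH (hu (n + j)%N); set P := s ^+ (n + j) => IH h.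
  have -> : C * (s ^+ n - s * P) = C * (s ^+ n - P) + c * P.
    by rewrite /C; field; rewrite gt_eqF.
  lra.
have distN N m : (N <= m)%N -> ipnorm ip (u m - u N) <= C * s ^+ N.
  move=> /subnKC <-; apply: le_trans (dist N (m - N)%N) _.
  by rewrite ler_wpM2l // gerBl exprn_ge0.
move=> e e0; have C1 : 0 < 2 * C + 1 by lra.
have [N hN] := exprn_lt_eventually s01 (divr_gt0 e0 C1).
exists N => m n hm hn; apply: le_lt_trans (ipnorm_dist_le hip _ (u N) _) _.
have := distN N m hm; have := distN N n hn; rewrite (ipnorm_distC hip (u N)).
have := hN N (leqnn N); rewrite ltr_pdivlMr //.
have : 0 <= s ^+ N by apply: exprn_ge0.
nra.
Qed.

Section FrameOperatorInverse.
Variables (R : realType) (H : lmodType R[i]) (ip : H -> H -> R[i]).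
Hypotheses (hip : is_inner_product ip) (hcomp : ip_complete ip).
Variables (I : countType) (f : I -> H) (A B : R).
Hypothesis hAB : frame_bounds ip f A B.
Local Notation nrm := (ipnorm ip).
Local Notation W := (closed_span ip f).
Local Notation T := (frame_op ip f).

Let A_gt0 : 0 < A. Proof. by case: hAB. Qed.
Let B_gt0 : 0 < B. Proof. by case: hAB => A0 AB _ _; apply: lt_le_trans AB. Qed.

Lemma richardson_contraction e : W e ->
  nrm (e - (B^-1)%:C *: T e) ^+ 2 <= (1 - A / B) * nrm e ^+ 2.
Proof.
move=> We; have [hQ _] := frame_form_spec hip hcomp hAB e.
have hl := frame_form_lower hip hcomp hAB We.
have hN := frame_op_norm_sqr hip hcomp hAB e.
have tB : B^-1 * B = 1 by rewrite mulVf // gt_eqF.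
have t0 : 0 < B^-1 by rewrite invr_gt0.
rewrite (ipnorm_sqr hip) (ipBl hip) !(ipBr hip) !(ipZl hip) !(ipZr hip) conjc_real.
rewrite (ipC hip e (T e)) hQ conjc_real (ip_self hip e) (ip_self hip (T e)).
rewrite !ReB !ReMr /=.
set Q := cRe _ in hl hN *; set N := nrm (T e) ^+ 2 in hN *; set E := nrm e ^+ 2 in hl *.
have h1 : B^-1 * (B^-1 * N) <= B^-1 * Q.
  rewrite ler_pM2l //; apply: le_trans (_ : B^-1 * (B * Q) <= _).
    by rewrite ler_pM2l.
  by rewrite mulrA tB mul1r.
have h2 : B^-1 * (A * E) <= B^-1 * Q by rewrite ler_pM2l.
have -> : (1 - A / B) * E = E - B^-1 * (A * E) by ring.
lra.
Qed.

Fixpoint richardson (y : H) (k : nat) : H :=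
  if k is k'.+1 then richardson y k' + (B^-1)%:C *: (y - T (richardson y k')) else 0.

Section Richardson.
Variable y : H.
Hypothesis Wy : W y.
Local Notation x := (richardson y).
Let s : R := Num.sqrt (1 - A / B).

Let q_ge0 : 0 <= 1 - A / B.
Proof. by case: hAB => _ AB _ _; rewrite subr_ge0 ler_pdivrMr // mul1r. Qed.

Let s_sqr : s ^+ 2 = 1 - A / B.
Proof. exact: sqr_sqrtr q_ge0. Qed.

Let s_bounds : 0 <= s < 1.
Proof.
rewrite sqrtr_ge0 /= -(ltr_pXn2r (n := 2)) ?nnegrE ?sqrtr_ge0 // expr1n s_sqr.
by rewrite ltrBlDr ltrDl divr_gt0.
Qed.

Lemma closed_span_richardson k : W (x k).
Proof.
elim: k => [|k IH] /=; first exact: (closed_span0 hip f).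
exact: (closed_span_comb hip _ IH (closed_spanB hip Wy (closed_span_frame_op hip hcomp hAB _))).
Qed.

Lemma richardson_residual_le k : nrm (y - T (x k)) <= s ^+ k * nrm y.
Proof.
elim: k => [|k IH]; first by rewrite /= (frame_op0 hip hcomp hAB) subr0 expr0 mul1r.
have Wr : W (y - T (x k)) := closed_spanB hip Wy (closed_span_frame_op hip hcomp hAB _).
have := richardson_contraction Wr.
rewrite /= (frame_op_linear hip hcomp hAB) opprD addrA -s_sqr -exprMn => h.
have /andP[s0 _] := s_bounds.
rewrite exprS -mulrA; apply: le_trans (ler_wpM2l s0 IH).
by rewrite -(ler_pXn2r (n := 2)) ?nnegrE ?ipnorm_ge0 ?mulr_ge0 ?ipnorm_ge0.
Qed.

Lemma richardson_increment_le k : nrm (x k.+1 - x k) <= (B^-1 * nrm y) * s ^+ k.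
Proof.
rewrite /= addrAC subrr add0r ipnormZ // cmod_real ger0_norm ?invr_ge0 ?(ltW B_gt0) //.
by rewrite -mulrA ler_wpM2l ?invr_ge0 ?(ltW B_gt0) // mulrC richardson_residual_le.
Qed.

Lemma richardson_cauchy : ip_cauchy ip x.
Proof. exact: geometric_increments_cauchy hip s_bounds richardson_increment_le. Qed.

Lemma frame_op_onto : exists g, W g /\ has_usum ip (fun j => ip g (f j) *: f j) y.
Proof.
have [g hg] := hcomp richardson_cauchy.
exists g; split.
  apply: (closed_span_closure hip) => e /hg [N /(_ N (leqnn N)) hN].
  by exists (x N); rewrite ipnorm_distC //; split => //; apply: closed_span_richardson.
suff <- : T g = y by exact: (has_usum_frame_op hip hcomp hAB).
apply/eqP; rewrite -subr_eq0; apply/eqP; apply: (ipnorm_eq0 hip).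
apply: lt_all_pos_eq0 (ipnorm_ge0 _ _) _ => e e0.
have ny0 := ipnorm_ge0 ip y.
have e1 : 0 < e / 2 / (nrm y + 1) by rewrite !divr_gt0 // ltr_wpDl.
have e2 : 0 < e / 2 / (B + 1) by rewrite !divr_gt0 // ltr_wpDl // ltW.
have [N1 hN1] := exprn_lt_eventually s_bounds e1; have [N2 hN2] := hg _ e2.
set k := maxn N1 N2; have h1 := hN1 k (leq_maxl _ _); have h2 := hN2 k (leq_maxr _ _).
have t1 : nrm (T g - T (x k)) <= B * nrm (x k - g).
  by rewrite ipnorm_distC // -(frame_opB hip hcomp hAB) (frame_op_norm_le hip hcomp hAB).
have t2 : nrm (T (x k) - y) <= s ^+ k * nrm y.
  by rewrite ipnorm_distC // richardson_residual_le.
have u1 : s ^+ k * nrm y <= s ^+ k * (nrm y + 1).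
  by rewrite ler_wpM2l ?exprn_ge0 ?(proj1 (andP s_bounds)) // lerDl.
have u2 : B * nrm (x k - g) <= nrm (x k - g) * (B + 1).
  by rewrite mulrC ler_wpM2l ?ipnorm_ge0 // lerDl.
rewrite ltr_pdivlMr ?ltr_wpDl // in h1; rewrite ltr_pdivlMr ?ltr_wpDl ?ltW // in h2.
have := ipnorm_dist_le hip (T g) (T (x k)) y.
lra.
Qed.

End Richardson.

Lemma canonical_dualP i : W (canonical_dual ip f i) /\
  has_usum ip (fun j => ip (canonical_dual ip f i) (f j) *: f j) (f i).
Proof.
have [g [Wg /(frame_opE hip) Tg]] := frame_op_onto (closed_span_gen hip f i).
have [Wcd <-] : W (canonical_dual ip f i) /\ T (canonical_dual ip f i) = f i.
  have exP : exists g, W g /\ T g = f i by exists g.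
  exact: (xgetPex 0 exP).
by split => //; apply: (has_usum_frame_op hip hcomp hAB).
Qed.
End FrameOperatorInverse.

Section FrameMeasureOrder.
Variables (R : realType) (I : countType) (In : nat -> {fset I}).

Lemma frame_aseq_bound (H : lmodType R[i]) (ip : H -> H -> R[i]) (f : I -> H) :
  is_inner_product ip -> forall n, `|frame_aseq In ip f n| <= 1.
Proof.
move=> hip n; rewrite /frame_aseq /frame_bseq Re_sum.
have dual01 i := ip_canonical_dual_bound hip f i.
set s := \sum_(i <- _) _.
have s0 : 0 <= s by apply: sumr_ge0 => i _; case/andP: (dual01 i).
have s1 : s <= (#|` In n|)%:R.
  by rewrite -sum1_size natr_sum; apply: ler_sum => i _; case/andP: (dual01 i).
have [->|k0] := posnP #|` In n|; first by rewrite invr0 mulr0 normr0.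
by rewrite ger0_norm ?divr_ge0 // ler_pdivrMr ?ltr0n // mul1r.
Qed.

Section TwoFrames.
Variables (H1 H2 : lmodType R[i]) (ip1 : H1 -> H1 -> R[i]) (ip2 : H2 -> H2 -> R[i]).
Hypotheses (hip1 : is_inner_product ip1) (hip2 : is_inner_product ip2).
Variables (f1 : I -> H1) (f2 : I -> H2).
Local Notation a1 := (frame_aseq In ip1 f1).
Local Notation a2 := (frame_aseq In ip2 f2).

Let a1_bound : forall n, `|a1 n| <= 1 := frame_aseq_bound f1 hip1.
Let a2_bound : forall n, `|a2 n| <= 1 := frame_aseq_bound f2 hip2.

Let diff_bound n : `|a1 n - a2 n| <= 2.
Proof. by apply: le_trans (ler_normB _ _) _; have := a1_bound n; have := a2_bound n; lra. Qed.

Let diff_bound' n : `|a2 n - a1 n| <= 2.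
Proof. by rewrite distrC. Qed.

Lemma frame_measure_eqP : frame_measure In ip1 f1 = frame_measure In ip2 f2 <->
  seq_approx In (frame_bseq In ip1 f1) (frame_bseq In ip2 f2).
Proof.
rewrite /seq_approx.
have -> : (fun n => (frame_bseq In ip1 f1 n - frame_bseq In ip2 f2 n) / (#|` In n|)%:R) =
    (fun n => a1 n - a2 n) by apply: funext => n; rewrite /frame_aseq mulrBl.
rewrite -(plim_eq0P diff_bound); split=> [e q|h].
  have := congr1 (fun F => F q) e.
  by rewrite (plimB (proj2_sig q) a1_bound a2_bound) /frame_measure => ->; rewrite subrr.
apply: funext => q; apply/eqP; rewrite -subr_eq0 /frame_measure.
by rewrite -(plimB (proj2_sig q) a1_bound a2_bound) h.
Qed.

Lemma frame_measure_leP :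
  (forall p : Nstar, frame_measure In ip1 f1 p <= frame_measure In ip2 f2 p) <->
  seq_leqq In (frame_bseq In ip1 f1) (frame_bseq In ip2 f2).
Proof.
rewrite /seq_leqq.
have -> : (fun n => ((frame_bseq In ip2 f2 n - frame_bseq In ip1 f1 n) / (#|` In n|)%:R)%:E) =
    (fun n => (a2 n - a1 n)%:E) by apply: funext => n; rewrite /frame_aseq mulrBl.
rewrite (limn_einf_ge0P (fun n => a2 n - a1 n)) -(plim_ge0P diff_bound').
by split=> h q; have := h q; rewrite (plimB (proj2_sig q) a2_bound a1_bound) subr_ge0.
Qed.

End TwoFrames.
End FrameMeasureOrder.

Section RieszSequence.
Variables (R : realType) (H : lmodType R[i]) (ip : H -> H -> R[i]).
Hypotheses (hip : is_inner_product ip) (hcomp : ip_complete ip).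
Variables (I : countType) (f : I -> H).
Hypothesis hriesz : is_riesz_basis_of_span ip f.
Local Notation nrm := (ipnorm ip).

Lemma riesz_usum0_coef_eq0 (d : I -> R[i]) i :
  has_usum ip (fun j => d j *: f j) 0 -> d i = 0.
Proof.
move=> hd; have [A [B [A0 _ hR]]] := hriesz.
suff : cmod (d i) ^+ 2 <= 0.
  move=> di; apply: cmod_eq0; apply/eqP.
  by rewrite -sqrf_eq0 eq_le di sqr_ge0.
apply/ler_addgt0Pr => e e0; rewrite add0r.
have Ae : 0 < A * e by rewrite mulr_gt0.
have sAe : 0 < Num.sqrt (A * e) by rewrite sqrtr_gt0.
have [J0 /(_ (J0 `|` [fset i])%fset (fsubsetUl _ _))] := hd _ sAe.
set J := (J0 `|` [fset i])%fset; rewrite subr0 => hJ.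
have di_le : cmod (d i) ^+ 2 <= \sum_(j <- J) cmod (d j) ^+ 2.
  have := ler_sum_fsubset (fun j => sqr_ge0 (cmod (d j))) (fsubsetUr J0 [fset i]%fset).
  by rewrite big_seq_fset1.
have : nrm (\sum_(j <- J) d j *: f j) ^+ 2 < A * e.
  rewrite -[A * e]sqr_sqrtr ?ltW //.
  by rewrite ltr_pXn2r ?nnegrE ?ipnorm_ge0 ?sqrtr_ge0.
have /andP[hlow _] := hR J d.
move=> /(le_lt_trans hlow) /(le_lt_trans (ler_wpM2l (ltW A0) di_le)).
by rewrite ltr_pM2l // => /ltW.
Qed.

Lemma has_usum_delta i : has_usum ip (fun j => (if j == i then 1 else 0) *: f j) (f i).
Proof.
move=> e e0; exists [fset i]%fset => J /fsubsetP /(_ i); rewrite inE eqxx => /(_ isT) iJ.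
rewrite (big_fsetD1 i iJ) /= eqxx scale1r big1_fset ?addr0 ?subrr ?(ipnorm0 hip) //.
by move=> j; rewrite !inE => /andP[/negbTE -> _] _; rewrite scale0r.
Qed.

Lemma ip_canonical_dual_riesz A B i : frame_bounds ip f A B ->
  ip (f i) (canonical_dual ip f i) = 1.
Proof.
move=> /(canonical_dualP hip hcomp) /(_ i) [_ hcd].
set d := fun j => ip (canonical_dual ip f i) (f j) - (if j == i then 1 else 0).
have /riesz_usum0_coef_eq0 : has_usum ip (fun j => d j *: f j) 0.
  have := has_usumD hip hcd (has_usumN hip (has_usum_delta i)); rewrite subrr.
  by apply: eq_has_usum => j; rewrite /d scalerBl.
move=> /(_ i) /eqP; rewrite /d eqxx subr_eq0 => /eqP h.
by rewrite (ipC hip) h conjc1.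
Qed.

End RieszSequence.

Section NestedExhaustion.
Variables (R : realType) (I : countType) (In : nat -> {fset I}).
Hypotheses (In_nested : forall n, (In n `<=` In n.+1)%fset)
  (In_cover : forall i, exists n, i \in In n).

Lemma In_eventually_mem i : exists N, forall n, (N <= n)%N -> i \in In n.
Proof.
have [N iN] := In_cover i; exists N => n /subnKC <-.
elim: (n - N)%N => [|k IH]; first by rewrite addn0.
by rewrite addnS; apply: (fsubsetP (In_nested _)).
Qed.

Lemma frame_measure_eq1 (H : lmodType R[i]) (ip : H -> H -> R[i]) (f : I -> H) :
  [set: I] !=set0 -> (forall i, ip (f i) (canonical_dual ip f i) = 1) ->
  frame_measure In ip f = (fun _ => 1).
Proof.
move=> [i0 _] dual1; have [N hN] := In_eventually_mem i0.
apply: funext => q; apply: (plim_eq (proj2_sig q)) => e e0.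
apply: (fu_cofinite (proj2_sig q) (N := N)) => n /hN i0n /=.
have card_gt0 : (0 < #|` In n|)%N by rewrite cardfs_gt0; apply/fset0Pn; exists i0.
rewrite /frame_aseq /frame_bseq (eq_bigr _ (fun i _ => dual1 i)) Re_sum.
have -> : \sum_(i <- In n) cRe (1 : R[i]) = #|` In n|%:R by rewrite -sum1_size natr_sum.
by rewrite divff ?subrr ?normr0 // pnatr_eq0 -lt0n.
Qed.

End NestedExhaustion.

Section PerturbedExpansion.
Variables (R : realType) (H : lmodType R[i]) (ip : H -> H -> R[i]).
Hypotheses (hip : is_inner_product ip) (hcomp : ip_complete ip).
Variables (I : countType) (f : I -> H) (A B : R).
Hypothesis hAB : frame_bounds ip f A B.

Lemma ip_canonical_dual_perturbed g (r : I -> R[i]) i :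
  has_usum ip (fun j => (ip g (f j) + r j) *: f j) (f i) ->
  has_usumC (fun j => r j * ip (f j) (canonical_dual ip f i)) 0 ->
  ip (f i) g = ip (f i) (canonical_dual ip f i).
Proof.
set cd := canonical_dual ip f i; have [_ hcd] := canonical_dualP hip hcomp hAB i.
move=> /(has_usum_ipl hip cd) hu /(has_usumC_sub hu); rewrite subr0 => hg.
(* conjugating <f_i, cd> = sum_j <g, f_j> <f_j, cd> expands <f_i, g> along cd *)
have /(has_usumC_unique (has_usum_ipl hip g hcd)) -> : has_usumC
    (fun j => ip (ip cd (f j) *: f j) g) (conjc (ip (f i) cd)).
  apply: eq_has_usumC (has_usumC_conj hg) => j.
  by rewrite !(ipZl hip) mulrDl addrK conjcM -!(ipC hip) mulrC.
by have [-> _] := ip_expansion_real hip hcd; apply: conjc_real.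
Qed.

End PerturbedExpansion.

Lemma big_pair (T : Type) (V1 V2 : nmodType) (r : seq T) (F : T -> V1 * V2) :
  \sum_(j <- r) F j = (\sum_(j <- r) (F j).1, \sum_(j <- r) (F j).2).
Proof.
elim: r => [|x r IH]; first by rewrite !big_nil.
by rewrite !big_cons IH.
Qed.

Section DirectSum.
Variables (R : realType) (H1 H2 : lmodType R[i]).
Variables (ip1 : H1 -> H1 -> R[i]) (ip2 : H2 -> H2 -> R[i]).
Hypotheses (hip1 : is_inner_product ip1) (hip2 : is_inner_product ip2).
Local Notation ipp := (ip_dsum ip1 ip2).
Local Notation nm1 := (ipnorm ip1).
Local Notation nm2 := (ipnorm ip2).
Local Notation nmp := (ipnorm ipp).

Lemma ip_dsum_inner : is_inner_product ipp.
Proof.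
split.
- by move=> a x y z; rewrite /ip_dsum /= (ipDZl hip1) (ipDZl hip2); ring.
- by move=> x y; rewrite /ip_dsum conjcD -(ipC hip1) -(ipC hip2).
- by move=> x; rewrite /ip_dsum addr_ge0 // ip_ge0.
- case=> x1 x2; rewrite /ip_dsum /= => /eqP.
  rewrite paddr_eq0 ?ip_ge0 // => /andP[/eqP h1 /eqP h2].
  by rewrite (ip_eq0 hip1 h1) (ip_eq0 hip2 h2).
Qed.

Lemma ipnorm_dsum_sqr x : nmp x ^+ 2 = nm1 x.1 ^+ 2 + nm2 x.2 ^+ 2.
Proof. by rewrite (ipnorm_sqr ip_dsum_inner) ReD -(ipnorm_sqr hip1) -(ipnorm_sqr hip2). Qed.

Lemma ipnorm_dsum_fst x : nm1 x.1 <= nmp x.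
Proof.
by rewrite -(ler_pXn2r (n := 2)) ?nnegrE ?ipnorm_ge0 // ipnorm_dsum_sqr lerDl sqr_ge0.
Qed.

Lemma ipnorm_dsum_snd x : nm2 x.2 <= nmp x.
Proof.
by rewrite -(ler_pXn2r (n := 2)) ?nnegrE ?ipnorm_ge0 // ipnorm_dsum_sqr lerDr sqr_ge0.
Qed.

Lemma ipnorm_dsum_le x : nmp x <= nm1 x.1 + nm2 x.2.
Proof.
rewrite -(ler_pXn2r (n := 2)) ?nnegrE ?ipnorm_ge0 ?addr_ge0 ?ipnorm_ge0 //.
rewrite ipnorm_dsum_sqr sqrrD.
by have := ipnorm_ge0 ip1 x.1; have := ipnorm_ge0 ip2 x.2; nra.
Qed.

Lemma ip_dsum_complete : ip_complete ip1 -> ip_complete ip2 -> ip_complete ipp.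
Proof.
move=> c1 c2 u hu.
have [l1 hl1] : exists l1, ip_cvg ip1 (fun n => (u n).1) l1.
  apply: c1 => e /hu [N hN]; exists N => m n hm hn.
  exact: le_lt_trans (ipnorm_dsum_fst (u m - u n)) (hN m n hm hn).
have [l2 hl2] : exists l2, ip_cvg ip2 (fun n => (u n).2) l2.
  apply: c2 => e /hu [N hN]; exists N => m n hm hn.
  exact: le_lt_trans (ipnorm_dsum_snd (u m - u n)) (hN m n hm hn).
exists (l1, l2) => e e0; have e2 : 0 < e / 2 by rewrite divr_gt0.
have [N1 hN1] := hl1 _ e2; have [N2 hN2] := hl2 _ e2.
exists (maxn N1 N2) => n; rewrite geq_max => /andP[n1 n2].
have := hN1 n n1; have := hN2 n n2; have := ipnorm_dsum_le (u n - (l1, l2)).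
by rewrite /=; lra.
Qed.

Variables (I : countType) (f1 : I -> H1) (f2 : I -> H2).
Local Notation F := (fun j => (f1 j, f2 j)).

Lemma has_usum_dsum_fst (x : I -> H1 * H2) l :
  has_usum ipp x l -> has_usum ip1 (fun j => (x j).1) l.1.
Proof.
move=> h e /h [J0 hJ0]; exists J0 => J /hJ0; apply: le_lt_trans.
by apply: le_trans (ipnorm_dsum_fst _); rewrite big_pair.
Qed.

Lemma has_usum_dsum_snd (x : I -> H1 * H2) l :
  has_usum ipp x l -> has_usum ip2 (fun j => (x j).2) l.2.
Proof.
move=> h e /h [J0 hJ0]; exists J0 => J /hJ0; apply: le_lt_trans.
by apply: le_trans (ipnorm_dsum_snd _); rewrite big_pair.
Qed.

Lemma closed_span_dsum_fst g : closed_span ipp F g -> closed_span ip1 f1 g.1.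
Proof.
move=> hg e /hg [_ [[J [c ->]] h]]; exists (\sum_(j <- J) c j *: f1 j).
by split; [exists J, c | apply: le_lt_trans h; apply: le_trans (ipnorm_dsum_fst _); rewrite big_pair].
Qed.

Lemma closed_span_dsum_snd g : closed_span ipp F g -> closed_span ip2 f2 g.2.
Proof.
move=> hg e /hg [_ [[J [c ->]] h]]; exists (\sum_(j <- J) c j *: f2 j).
by split; [exists J, c | apply: le_lt_trans h; apply: le_trans (ipnorm_dsum_snd _); rewrite big_pair].
Qed.

End DirectSum.

Section DirectSumFrames.
Variables (R : realType) (H1 H2 : lmodType R[i]).
Variables (ip1 : H1 -> H1 -> R[i]) (ip2 : H2 -> H2 -> R[i]).
Hypotheses (hip1 : is_inner_product ip1) (hip2 : is_inner_product ip2).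
Hypotheses (hcomp1 : ip_complete ip1) (hcomp2 : ip_complete ip2).
Variables (I : countType) (f1 : I -> H1) (f2 : I -> H2).
Hypothesis hort : ortho_supersets ip1 ip2 f1 f2.
Local Notation ipp := (ip_dsum ip1 ip2).
Local Notation F := (fun j => (f1 j, f2 j)).
Local Notation nm1 := (ipnorm ip1).
Local Notation nm2 := (ipnorm ip2).

Lemma synthesis_bound_dsum B1 B2 : synthesis_bound ip1 f1 B1 -> synthesis_bound ip2 f2 B2 ->
  synthesis_bound ipp F (B1 + B2).
Proof.
move=> h1 h2 J c; rewrite (ipnorm_dsum_sqr hip1 hip2) big_pair /= mulrDl.
exact: lerD (h1 J c) (h2 J c).
Qed.

Lemma lower_frame_bound_dsum A1 A2 : 0 < A1 -> 0 < A2 ->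
  lower_frame_bound ip1 f1 A1 -> lower_frame_bound ip2 f2 A2 ->
  lower_frame_bound ipp F (Num.min A1 A2).
Proof.
move=> A10 A20 hl1 hl2 h Wh e e0.
have W1 := closed_span_dsum_fst hip1 hip2 Wh; have W2 := closed_span_dsum_snd hip1 hip2 Wh.
have e4 : 0 < e / 4 by rewrite divr_gt0.
have [J1 hJ1] := hl1 _ W1 _ e4; have [J2 hJ2] := hl2 _ W2 _ e4.
have [J3 hJ3] := hort W1 W2 e4.
set J := (J1 `|` J2 `|` J3)%fset; exists J.
have := hJ3 J (fsubsetUr _ _); rewrite subr0 => /ltW /(le_trans (normRe_le_cmod _)).
rewrite ler_norml => /andP[cross _].
rewrite /ip_dsum; under eq_bigr do rewrite cmodD_sqr -(ipC hip2).
rewrite !big_split /= -mulr_sumr -Re_sum (ipnorm_dsum_sqr hip1 hip2) mulrDr.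
have := ler_sum_fsubset (fun j => sqr_ge0 (cmod (ip1 h.1 (f1 j))))
  (fsubset_trans (fsubsetUl J1 J2) (fsubsetUl _ J3)).
have := ler_sum_fsubset (fun j => sqr_ge0 (cmod (ip2 h.2 (f2 j))))
  (fsubset_trans (fsubsetUr J1 J2) (fsubsetUl _ J3)).
have q1 : Num.min A1 A2 * nm1 h.1 ^+ 2 <= A1 * nm1 h.1 ^+ 2.
  by rewrite ler_wpM2r ?sqr_ge0 // ge_min lexx.
have q2 : Num.min A1 A2 * nm2 h.2 ^+ 2 <= A2 * nm2 h.2 ^+ 2.
  by rewrite ler_wpM2r ?sqr_ge0 // ge_min lexx orbT.
lra.
Qed.

Lemma frame_bounds_dsum A1 B1 A2 B2 :
  frame_bounds ip1 f1 A1 B1 -> frame_bounds ip2 f2 A2 B2 ->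
  frame_bounds ipp F (Num.min (Num.min A1 A2) (B1 + B2)) (B1 + B2).
Proof.
move=> [A10 AB1 hB1 hA1] [A20 AB2 hB2 hA2].
apply: frame_bounds_min; first by rewrite lt_min A10 A20.
- by rewrite addr_gt0 //; [apply: lt_le_trans AB1 | apply: lt_le_trans AB2].
- exact: (synthesis_bound_dsum hB1 hB2).
- exact: (lower_frame_bound_dsum A10 A20 hA1 hA2).
Qed.

Section CanonicalDual.
Variables (A1 B1 A2 B2 : R).
Hypotheses (hAB1 : frame_bounds ip1 f1 A1 B1) (hAB2 : frame_bounds ip2 f2 A2 B2).

Lemma ip_canonical_dual_dsum i : ipp (F i) (canonical_dual ipp F i) =
  ip1 (f1 i) (canonical_dual ip1 f1 i) + ip2 (f2 i) (canonical_dual ip2 f2 i).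
Proof.
have [WG hG] := canonical_dualP (ip_dsum_inner hip1 hip2)
  (ip_dsum_complete hip1 hip2 hcomp1 hcomp2) (frame_bounds_dsum hAB1 hAB2) i.
set G := canonical_dual ipp F i in WG hG *.
have [W1 _] := canonical_dualP hip1 hcomp1 hAB1 i.
have [W2 _] := canonical_dualP hip2 hcomp2 hAB2 i.
rewrite /ip_dsum /=; congr (_ + _).
  apply: (ip_canonical_dual_perturbed hip1 hcomp1 hAB1 (r := fun j => ip2 G.2 (f2 j))).
    exact: (has_usum_dsum_fst hip1 hip2 hG).
  have := has_usumC_conj (hort W1 (closed_span_dsum_snd hip1 hip2 WG)); rewrite conjc0.
  by apply: eq_has_usumC => j; rewrite conjcM -(ipC hip1) -(ipC hip2) mulrC.
apply: (ip_canonical_dual_perturbed hip2 hcomp2 hAB2 (r := fun j => ip1 G.1 (f1 j))).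
  by apply: eq_has_usum (has_usum_dsum_snd hip1 hip2 hG) => j; rewrite /ip_dsum /= addrC.
exact: hort (closed_span_dsum_fst hip1 hip2 WG) W2.
Qed.

Lemma frame_measure_dsum (In : nat -> {fset I}) :
  frame_measure In ipp F = frame_measure In ip1 f1 \+ frame_measure In ip2 f2.
Proof.
apply: funext => q; rewrite /frame_measure /=.
rewrite -(plimD (proj2_sig q) (frame_aseq_bound In f1 hip1) (frame_aseq_bound In f2 hip2)).
congr plim; apply: funext => n; rewrite /frame_aseq /frame_bseq -mulrDl -ReD -big_split /=.
by congr (cRe _ / _); apply: eq_bigr => j _; apply: ip_canonical_dual_dsum.
Qed.

End CanonicalDual.
End DirectSumFrames.

Theorem theorem4p2 (R : realType) (I : countType) (In : nat -> {fset I})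
  (I_nonempty : [set: I] !=set0)
  (In_nested : forall n : nat, (In n `<=` In n.+1)%fset)
  (In_cover : forall i : I, exists n : nat, i \in In n) :
  (* (1) *)
  (forall (H1 H2 : lmodType R[i]) (ip1 : H1 -> H1 -> R[i]) (ip2 : H2 -> H2 -> R[i])
          (f1 : I -> H1) (f2 : I -> H2),
      separable_hilbert ip1 -> separable_hilbert ip2 ->
      is_frame ip1 f1 -> is_frame ip2 f2 ->
      (frame_measure In ip1 f1 = frame_measure In ip2 f2
        <-> seq_approx In (frame_bseq In ip1 f1) (frame_bseq In ip2 f2)))
  (* (2) *)
  /\ (forall (H1 H2 : lmodType R[i]) (ip1 : H1 -> H1 -> R[i]) (ip2 : H2 -> H2 -> R[i])
          (f1 : I -> H1) (f2 : I -> H2),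
      separable_hilbert ip1 -> separable_hilbert ip2 ->
      is_frame ip1 f1 -> is_frame ip2 f2 ->
      ((forall p : Nstar, frame_measure In ip1 f1 p <= frame_measure In ip2 f2 p)
        <-> seq_leqq In (frame_bseq In ip1 f1) (frame_bseq In ip2 f2)))
  (* (3) *)
  /\ (forall (H : lmodType R[i]) (ip : H -> H -> R[i]) (f : I -> H),
      separable_hilbert ip -> is_frame ip f ->
      is_riesz_basis_of_span ip f ->
      frame_measure In ip f = (fun _ => 1))
  (* (4) *)
  /\ (forall (H1 H2 : lmodType R[i]) (ip1 : H1 -> H1 -> R[i]) (ip2 : H2 -> H2 -> R[i])
          (f1 : I -> H1) (f2 : I -> H2),
      separable_hilbert ip1 -> separable_hilbert ip2 ->
      is_frame ip1 f1 -> is_frame ip2 f2 ->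
      ortho_supersets ip1 ip2 f1 f2 ->
      frame_measure In (ip_dsum ip1 ip2) (fun i => (f1 i, f2 i))
        = frame_measure In ip1 f1 \+ frame_measure In ip2 f2).
Proof.
split; [|split; [|split]].
- by move=> H1 H2 ip1 ip2 f1 f2 [hip1 _ _] [hip2 _ _] _ _; apply: frame_measure_eqP.
- by move=> H1 H2 ip1 ip2 f1 f2 [hip1 _ _] [hip2 _ _] _ _; apply: frame_measure_leP.
- move=> H ip f [hip hcomp _] /(is_frame_bounds hip) [A [B hAB]] hriesz.
  apply: frame_measure_eq1 => // i.
  exact: (ip_canonical_dual_riesz hip hcomp hriesz i hAB).
- move=> H1 H2 ip1 ip2 f1 f2 [hip1 hcomp1 _] [hip2 hcomp2 _] hf1 hf2 hort.
  have [A1 [B1 hAB1]] := is_frame_bounds hip1 hf1.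
  have [A2 [B2 hAB2]] := is_frame_bounds hip2 hf2.
  exact: (frame_measure_dsum hip1 hip2 hcomp1 hcomp2 hort hAB1 hAB2 In).
Qed.
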